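(* (a) Let $p,q>0$ and $a_k=e^{pk^q}$, $k\ge1$; then $\lim_{N\to\infty}E[U_j^N]=I(\alpha;j)<\infty$ for all $j\ge2$. (b) The same holds for $a_k=k!$, $k\ge1$. (c) For $p>0$ and the decaying sequence $b_k=e^{-pk}$, $k\ge1$, the limit $\lim_{N\to\infty}E[U_j^N]$ exists and is finite for all $j\ge2$, and equals $I(\alpha;j)$ with $\alpha=\{e^{pk}\}_{k\ge1}$.
   Context: For a positive sequence $\{c_k\}$ and $N\ge2$, coupon type $k\in\{1,\dots,N\}$ has probability $c_k/\sum_{i=1}^Nc_i$; $U_j^N$ is the number of empty album places of the $j$-th collector when the first collector completes her set (each collector passes duplicates to the next one), with $$E[U_j^N]=\sum_{k=1}^N\int_0^\infty c_k e^{-c_k t}\frac{(c_kt)^{j-1}}{(j-1)!}\prod_{i\ne k,\,1\le i\le N}\big(1-e^{-c_i t}\big)\,dt.$$ For a positive sequence $\alpha=\{a_k\}$: $x_\alpha:=\inf\{x\in[0,1]:\sum_k x^{a_k}=\infty\}$, $L(x;\alpha;j):=\sum_{k}a_k^j\frac{x^{a_k}}{1-x^{a_k}}$, $F(x;\alpha):=\prod_{k}(1-x^{a_k})$, $I(\alpha;j):=\frac{1}{(j-1)!}\int_0^{x_\alpha}L(x;\alpha;j)F(x;\alpha)|\ln x|^{j-1}\frac{dx}{x}$. *)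

From Stdlib Require Import Reals Lra Lia Arith Factorial Classical ClassicalEpsilon.
Open Scope R_scope.

(* x^y for real y with the convention 0^y = 0 (y > 0); x > 0 uses Rpower. *)
Definition rpow (x y : R) : R := if Rle_dec x 0 then 0 else Rpower x y.

Definition lim_seq (u : nat -> R) : R := epsilon (inhabits 0) (fun l => Un_cv u l).

Definition ImpIntInf (f : R -> R) (a l : R) : Prop :=
  (forall v, a <= v -> inhabited (Riemann_integrable f a v)) /\
  (forall eps, eps > 0 -> exists M, forall v (pr : Riemann_integrable f a v),
       M <= v -> a <= v -> Rabs (RiemannInt pr - l) < eps).

Definition ImpIntOpen (f : R -> R) (a b l : R) : Prop :=
  (forall u v, a < u -> u <= v -> v < b -> inhabited (Riemann_integrable f u v)) /\
  (forall eps, eps > 0 -> exists d, d > 0 /\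
     forall u v (pr : Riemann_integrable f u v),
       a < u -> u < a + d -> b - d < v -> v < b -> u <= v ->
       Rabs (RiemannInt pr - l) < eps).

Definition imp_int_inf (f : R -> R) (a : R) : R :=
  epsilon (inhabits 0) (fun l => ImpIntInf f a l).

(* Sequences are indexed by k >= 1: the value at k is c k (c 0 is unused). *)

(* integrand of the k-th summand of E[U_j^N]:
   c_k e^{-c_k t} (c_k t)^{j-1}/(j-1)! prod_{i<>k, 1<=i<=N} (1 - e^{-c_i t}) *)
Definition EU_integrand (c : nat -> R) (N j k : nat) (t : R) : R :=
  c k * exp (- (c k * t)) * (c k * t) ^ (j - 1) / INR (fact (j - 1)) *
  prod_f_R0 (fun i => if Nat.eqb (S i) k then 1 else 1 - exp (- (c (S i) * t)))
            (N - 1).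

Definition EU (c : nat -> R) (j N : nat) : R :=
  sum_f_R0 (fun k => imp_int_inf (EU_integrand c N j (S k)) 0) (N - 1).

Definition is_inf (S : R -> Prop) (m : R) : Prop :=
  (forall x, S x -> m <= x) /\ (forall m', (forall x, S x -> m' <= x) -> m' <= m).

Definition diverge_set (a : nat -> R) (x : R) : Prop :=
  0 <= x <= 1 /\
  forall M, exists n, sum_f_R0 (fun k => rpow x (a (S k))) n > M.

Definition xalpha (a : nat -> R) : R := epsilon (inhabits 0) (is_inf (diverge_set a)).

Definition Lfun (a : nat -> R) (j : nat) (x : R) : R :=
  lim_seq (fun n => sum_f_R0
    (fun k => (a (S k)) ^ j * rpow x (a (S k)) / (1 - rpow x (a (S k)))) n).

Definition Ffun (a : nat -> R) (x : R) : R :=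
  lim_seq (fun n => prod_f_R0 (fun k => 1 - rpow x (a (S k))) n).

Definition I_integrand (a : nat -> R) (j : nat) (x : R) : R :=
  / INR (fact (j - 1)) * (Lfun a j x * Ffun a x * (Rabs (ln x)) ^ (j - 1) / x).

(* "lim_{N->oo} E[U_j^N] = I(alpha;j) < oo" for coupon weights c and sequence a:
   every integral defining E[U_j^N] converges, the improper integral I(alpha;j)
   over (0, x_alpha) converges to a finite value l, and E[U_j^N] -> l. *)
Definition LimitIsI (c a : nat -> R) (j : nat) : Prop :=
  (forall N k, (2 <= N)%nat -> (1 <= k <= N)%nat ->
      exists v, ImpIntInf (EU_integrand c N j k) 0 v) /\
  exists l, ImpIntOpen (I_integrand a j) 0 (xalpha a) l /\
            Un_cv (fun N => EU c j N) l.

From Stdlib Require Import Reals Factorial Lra Lia ClassicalEpsilon FunctionalExtensionality.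
From Coquelicot Require Import Coquelicot.
Open Scope R_scope.

(* The substitution x = e^{-t} turns I(alpha; j) into an integral over (0, +oo) whose
   integrand is the limit, as N -> oo, of the integrand of E[U_j^N] with c = a, which is
   sum_{k <= N} of a_k e^{-a_k t} (a_k t)^{j-1}/(j-1)! prod_{i <> k} (1 - e^{-a_i t}).
   Convergence on compact subsets of (0, +oo) comes from the uniform convergence of the
   series L and of the product F on compact subsets of (0, 1), which holds because
   sum_k a_k^j x^{a_k} converges there (a_k grows at least linearly).  Near t = 0 and
   t = +oo, and for large k, the k-th summand is dominated, uniformly in N, by
   a_k^j t^{j-1} e^{-a_k t}/(j-1)! prod_{i < k} (1 - e^{-a_i t}); bounding
   1 - e^{-a_i t} <= a_i t, its integral is at most
   D_k = (j+k-2)!/(j-1)! a_1 ... a_{k-1} / a_k^{k-1}, and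
   D_{k+1}/D_k = (j+k-1) (a_k/a_{k+1})^k, which is eventually <= 1/2 for e^{pk^q}, k!
   and e^{pk}, so sum_k D_k < oo.  For (c), the substitution t -> e^{-p(N+1)} t
   together with the reversal k -> N+1-k identifies E[U_j^N] for c_k = e^{-pk} with
   E[U_j^N] for c_k = e^{pk}. *)

Lemma lim_seq_eq u l : Un_cv u l -> lim_seq u = l.
Proof.
  intros H. unfold lim_seq.
  assert (H2 := epsilon_spec (inhabits 0) (fun l => Un_cv u l) (ex_intro _ l H)).
  exact (UL_sequence _ _ _ H2 H).
Qed.

Lemma ImpIntInf_unique f a l1 l2 : ImpIntInf f a l1 -> ImpIntInf f a l2 -> l1 = l2.
Proof.
  intros [Hint H1] [_ H2]. apply cond_eq. intros e He.
  destruct (H1 (e / 2) ltac:(lra)) as [M1 HM1]. destruct (H2 (e / 2) ltac:(lra)) as [M2 HM2].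
  set (v := Rmax a (Rmax M1 M2)).
  assert (Hav : a <= v) by apply Rmax_l.
  assert (HM : M1 <= v /\ M2 <= v) by (unfold v; split; eauto using Rle_trans, Rmax_l, Rmax_r).
  destruct (Hint v Hav) as [pr].
  specialize (HM1 v pr (proj1 HM) Hav). specialize (HM2 v pr (proj2 HM) Hav).
  apply Rabs_def2 in HM1. apply Rabs_def2 in HM2. apply Rabs_def1; lra.
Qed.

Lemma imp_int_inf_eq f a l : ImpIntInf f a l -> imp_int_inf f a = l.
Proof.
  intros H. unfold imp_int_inf.
  assert (H2 := epsilon_spec (inhabits 0) (fun l => ImpIntInf f a l) (ex_intro _ l H)).
  exact (ImpIntInf_unique _ _ _ _ H2 H).
Qed.

Lemma ex_RInt_on_nonneg (f : R -> R) (u v : R) :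
  (forall t, 0 <= t -> continuous f t) -> 0 <= u -> 0 <= v -> ex_RInt f u v.
Proof.
  intros Hc Hu Hv. apply (@ex_RInt_continuous R_CompleteNormedModule). intros z Hz. apply Hc.
  destruct (Rle_dec u v); [rewrite Rmin_left in Hz|rewrite Rmin_right in Hz]; lra.
Qed.

Lemma ImpIntInf_RInt (f : R -> R) (l : R) : (forall t, 0 <= t -> continuous f t) ->
  ImpIntInf f 0 l <->
  (forall e, e > 0 -> exists M, forall v, M <= v -> 0 <= v -> Rabs (RInt f 0 v - l) < e).
Proof.
  intros Hc. split.
  - intros [_ Hl] e He. destruct (Hl e He) as [M HM]. exists M. intros v HMv Hv.
    rewrite (RInt_Reals f 0 v (ex_RInt_Reals_0 _ _ _ (ex_RInt_on_nonneg f 0 v Hc (Rle_refl 0) Hv))).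
    now apply HM.
  - intros Hl. split.
    + intros v Hv. constructor. apply ex_RInt_Reals_0, ex_RInt_on_nonneg; auto; lra.
    + intros e He. destruct (Hl e He) as [M HM]. exists M. intros v pr HMv Hv.
      rewrite <- RInt_Reals. now apply HM.
Qed.

Lemma is_RInt_uniqueR (f : R -> R) a b l : is_RInt f a b l -> RInt f a b = l.
Proof. apply (@is_RInt_unique R_CompleteNormedModule). Qed.
Lemma RInt_minusR (f g : R -> R) a b : ex_RInt f a b -> ex_RInt g a b ->
  RInt (fun x => f x - g x) a b = RInt f a b - RInt g a b.
Proof. intros. apply (@RInt_minus R_CompleteNormedModule); auto. Qed.
Lemma RInt_plusR (f g : R -> R) a b : ex_RInt f a b -> ex_RInt g a b ->
  RInt (fun x => f x + g x) a b = RInt f a b + RInt g a b.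
Proof. intros. apply (@RInt_plus R_CompleteNormedModule); auto. Qed.
Lemma RInt_scalR (f : R -> R) a b l : ex_RInt f a b ->
  RInt (fun x => l * f x) a b = l * RInt f a b.
Proof. intros. apply (@RInt_scal R_CompleteNormedModule); auto. Qed.
Lemma RInt_ChaslesR (f : R -> R) a b c : ex_RInt f a b -> ex_RInt f b c ->
  RInt f a b + RInt f b c = RInt f a c.
Proof. intros. apply (@RInt_Chasles R_CompleteNormedModule); auto. Qed.
Lemma RInt_constR (c u v : R) : RInt (fun _ => c) u v = (v - u) * c.
Proof. rewrite (@RInt_const R_CompleteNormedModule). reflexivity. Qed.
Lemma RInt_extR (f g : R -> R) a b :
  (forall x, Rmin a b < x < Rmax a b -> f x = g x) -> RInt f a b = RInt g a b.
Proof. intros. apply (@RInt_ext R_CompleteNormedModule); auto. Qed.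
Lemma ex_RInt_plusR (f g : R -> R) a b :
  ex_RInt f a b -> ex_RInt g a b -> ex_RInt (fun x => f x + g x) a b.
Proof. intros. apply (@ex_RInt_plus R_NormedModule); auto. Qed.
Lemma ex_RInt_minusR (f g : R -> R) a b :
  ex_RInt f a b -> ex_RInt g a b -> ex_RInt (fun x => f x - g x) a b.
Proof. intros. apply (@ex_RInt_minus R_NormedModule); auto. Qed.
Lemma ex_RInt_scalR (f : R -> R) a b l : ex_RInt f a b -> ex_RInt (fun x => l * f x) a b.
Proof. intros. apply (@ex_RInt_scal R_NormedModule); auto. Qed.
Lemma ex_RInt_contR (f : R -> R) a b :
  (forall z, Rmin a b <= z <= Rmax a b -> continuous f z) -> ex_RInt f a b.
Proof. intros. apply (@ex_RInt_continuous R_CompleteNormedModule); auto. Qed.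

Lemma RInt_nonneg_mono (f : R -> R) u' u v v' :
  (forall t, 0 <= t -> continuous f t) -> (forall t, 0 <= t -> 0 <= f t) ->
  0 <= u' -> u' <= u -> u <= v -> v <= v' -> RInt f u v <= RInt f u' v'.
Proof.
  intros Hc Hp H1 H2 H3 H4.
  assert (Ex : forall x y, 0 <= x -> 0 <= y -> ex_RInt f x y) by (intros; apply ex_RInt_on_nonneg; auto).
  assert (Hge : forall x y, 0 <= x -> x <= y -> 0 <= RInt f x y).
  { intros x y Hx Hxy. apply RInt_ge_0; [lra | apply Ex; lra | intros t Ht; apply Hp; lra]. }
  rewrite <- (RInt_ChaslesR f u' u v') by (apply Ex; lra).
  rewrite <- (RInt_ChaslesR f u v v') by (apply Ex; lra).
  assert (0 <= RInt f u' u) by (apply Hge; lra). assert (0 <= RInt f v v') by (apply Hge; lra).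
  lra.
Qed.

Lemma ImpIntInf_of_bounded_nonneg (f : R -> R) (B : R) :
  (forall t, 0 <= t -> continuous f t) -> (forall t, 0 <= t -> 0 <= f t) ->
  (forall V, 0 <= V -> RInt f 0 V <= B) -> exists l, ImpIntInf f 0 l.
Proof.
  intros Hc Hp HB.
  set (E := fun x => exists V, 0 <= V /\ x = RInt f 0 V).
  destruct (completeness E) as [l [Hub Hlub]].
  { exists B. intros x [V [HV ->]]. now apply HB. }
  { exists (RInt f 0 0). exists 0. split; lra. }
  exists l. apply ImpIntInf_RInt; auto. intros e He.
  destruct (Classical_Prop.classic (exists V, 0 <= V /\ RInt f 0 V > l - e)) as [[V [HV HVl]]|Hn].
  - exists V. intros v Hv _.
    assert (RInt f 0 V <= RInt f 0 v) by (apply RInt_nonneg_mono; auto; lra).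
    assert (RInt f 0 v <= l) by (apply Hub; exists v; split; auto; lra).
    apply Rabs_def1; lra.
  - exfalso. assert (l <= l - e); [|lra]. apply Hlub. intros x [V [HV ->]].
    apply Rnot_lt_le. intro. apply Hn. exists V. split; auto; lra.
Qed.

Lemma ex_derive_continuousR (f : R -> R) x : ex_derive f x -> continuous f x.
Proof. intros H. apply (ex_derive_continuous f x H). Qed.
Lemma continuousR_plus (f g : R -> R) x :
  continuous f x -> continuous g x -> continuous (fun t => f t + g t) x.
Proof. intros. apply (@continuous_plus R_UniformSpace R_AbsRing R_NormedModule f g); auto. Qed.
Lemma continuousR_mult (f g : R -> R) x :
  continuous f x -> continuous g x -> continuous (fun t => f t * g t) x.
Proof. intros. apply (@continuous_mult R_UniformSpace R_AbsRing f g); auto. Qed.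
Lemma continuousR_const (c x : R) : continuous (fun _ : R => c) x.
Proof. apply (@continuous_const R_UniformSpace R_UniformSpace). Qed.
Lemma continuousR_id (x : R) : continuous (fun t : R => t) x.
Proof. apply (@continuous_id R_UniformSpace). Qed.
Lemma continuousR_comp (f g : R -> R) x :
  continuous f x -> continuous g (f x) -> continuous (fun t => g (f t)) x.
Proof. intros. apply (@continuous_comp R_UniformSpace R_UniformSpace R_UniformSpace f g); auto. Qed.
Lemma continuousR_ext (f g : R -> R) x :
  locally x (fun y => g y = f y) -> continuous g x -> continuous f x.
Proof. intros. apply (@continuous_ext_loc R_UniformSpace R_UniformSpace f g x); auto. Qed.
Lemma continuousR_opp (f : R -> R) x : continuous f x -> continuous (fun t => - f t) x.
Proof.
  intros. apply (continuousR_comp f Ropp). auto. apply ex_derive_continuousR. auto_derive. auto.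
Qed.
Lemma continuousR_minus (f g : R -> R) x :
  continuous f x -> continuous g x -> continuous (fun t => f t - g t) x.
Proof. intros. apply continuousR_plus; auto. apply continuousR_opp; auto. Qed.
Lemma continuousR_pow (f : R -> R) n x : continuous f x -> continuous (fun t => f t ^ n) x.
Proof.
  intros. apply (continuousR_comp f (fun u => u ^ n)); auto.
  apply ex_derive_continuousR. auto_derive. auto.
Qed.
Lemma continuousR_div (f g : R -> R) x :
  continuous f x -> continuous g x -> g x <> 0 -> continuous (fun t => f t / g t) x.
Proof.
  intros. apply continuousR_mult; auto. apply (continuousR_comp g Rinv); auto.
  apply ex_derive_continuousR. auto_derive. auto.
Qed.

Lemma continuousR_sum (f : nat -> R -> R) n x :
  (forall i, (i <= n)%nat -> continuous (f i) x) ->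
  continuous (fun t => sum_f_R0 (fun i => f i t) n) x.
Proof.
  induction n; intros H; simpl.
  - apply H; lia.
  - apply continuousR_plus. apply IHn; intros; apply H; lia. apply H; lia.
Qed.
Lemma continuousR_prod (f : nat -> R -> R) n x :
  (forall i, (i <= n)%nat -> continuous (f i) x) ->
  continuous (fun t => prod_f_R0 (fun i => f i t) n) x.
Proof.
  induction n; intros H; simpl.
  - apply H; lia.
  - apply continuousR_mult. apply IHn; intros; apply H; lia. apply H; lia.
Qed.

Lemma continuous_pow_exp n a t : continuous (fun t => t ^ n * exp (- (a * t))) t.
Proof. apply ex_derive_continuousR. auto_derive. auto. Qed.

Lemma RInt_exp_neg a V : 0 < a ->
  RInt (fun t => t ^ 0 * exp (- (a * t))) 0 V = (1 - exp (- (a * V))) / a.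
Proof.
  intros Ha.
  assert (H : is_RInt (fun t => t ^ 0 * exp (- (a * t))) 0 V
               (minus ((fun t => - exp (- (a * t)) / a) V) ((fun t => - exp (- (a * t)) / a) 0))).
  { apply (@is_RInt_derive R_CompleteNormedModule (fun t => - exp (- (a * t)) / a)).
    - intros x _. auto_derive. auto. field. lra.
    - intros x _. apply continuous_pow_exp. }
  rewrite (is_RInt_uniqueR _ _ _ _ H). unfold minus, plus, opp; simpl.
  rewrite Rmult_0_r, Ropp_0, exp_0. field. lra.
Qed.

(* Integration by parts against the antiderivative -t^{n+1} e^{-at} / a. *)
Lemma RInt_pow_exp_S a n V : 0 < a ->
  RInt (fun t => t ^ S n * exp (- (a * t))) 0 V =
  INR (S n) / a * RInt (fun t => t ^ n * exp (- (a * t))) 0 V - V ^ S n * exp (- (a * V)) / a.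
Proof.
  intros Ha.
  set (g := fun t => t ^ n * exp (- (a * t))).
  set (h := fun t => t ^ S n * exp (- (a * t))).
  assert (Hd : is_RInt (fun t => minus (h t) (scal (INR (S n) / a) (g t))) 0 V
     (minus ((fun t => - t ^ S n * exp (- (a * t)) / a) V)
            ((fun t => - t ^ S n * exp (- (a * t)) / a) 0))).
  { apply (@is_RInt_derive R_CompleteNormedModule (fun t => - t ^ S n * exp (- (a * t)) / a)).
    - intros x _. unfold h, g, minus, plus, opp, scal; simpl. unfold mult; simpl. auto_derive. auto.
      destruct n as [|m]; simpl; field; lra.
    - intros x _. unfold minus, plus, opp, scal; simpl. unfold mult; simpl.
      apply ex_derive_continuousR. unfold h, g. auto_derive. auto. }
  assert (Exh : ex_RInt h 0 V) by (apply ex_RInt_contR; intros; apply continuous_pow_exp).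
  assert (Exg : ex_RInt g 0 V) by (apply ex_RInt_contR; intros; apply continuous_pow_exp).
  apply is_RInt_uniqueR in Hd.
  rewrite (RInt_extR _ (fun t => h t - INR (S n) / a * g t)) in Hd by reflexivity.
  rewrite RInt_minusR in Hd; auto. 2: apply ex_RInt_scalR; auto.
  rewrite RInt_scalR in Hd; auto.
  unfold minus, plus, opp in Hd; simpl in Hd.
  change (match n with 0%nat => 1 | S _ => INR n + 1 end) with (INR (S n)) in Hd.
  change (V * V ^ n) with (V ^ S n) in Hd. rewrite !Rmult_0_l, !Ropp_0, !Rmult_0_l in Hd.
  fold h g. unfold Rdiv in Hd |- *. lra.
Qed.

Lemma RInt_pow_exp_le a n V : 0 < a -> 0 <= V ->
  RInt (fun t => t ^ n * exp (- (a * t))) 0 V <= INR (fact n) / a ^ S n.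
Proof.
  intros Ha HV. induction n.
  - rewrite RInt_exp_neg by lra. assert (0 < exp (- (a * V))) by apply exp_pos.
    replace (INR (fact 0) / a ^ 1) with (1 / a) by (simpl; field; lra).
    unfold Rdiv. apply Rmult_le_compat_r; [left; apply Rinv_0_lt_compat|]; lra.
  - rewrite RInt_pow_exp_S by lra.
    assert (0 <= V ^ S n * exp (- (a * V)) / a).
    { apply Rdiv_le_0_compat; [|lra]. apply Rmult_le_pos. apply pow_le; lra. left; apply exp_pos. }
    assert (INR (S n) / a * RInt (fun t => t ^ n * exp (- (a * t))) 0 V
            <= INR (S n) / a * (INR (fact n) / a ^ S n)).
    { apply Rmult_le_compat_l; auto. apply Rdiv_le_0_compat. apply pos_INR. lra. }
    replace (INR (fact (S n)) / a ^ S (S n)) with (INR (S n) / a * (INR (fact n) / a ^ S n)).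
    + lra.
    + rewrite fact_simpl, mult_INR. simpl. field. split; [apply pow_nonzero|]; lra.
Qed.

Lemma RInt_sum_f_R0 (f : nat -> R -> R) n u v :
  (forall i, (i <= n)%nat -> ex_RInt (f i) u v) ->
  RInt (fun t => sum_f_R0 (fun i => f i t) n) u v = sum_f_R0 (fun i => RInt (f i) u v) n.
Proof.
  intros H.
  assert (Hex : forall m, (m <= n)%nat -> ex_RInt (fun t => sum_f_R0 (fun i => f i t) m) u v).
  { induction m; intros Hm; simpl. apply H; lia. apply ex_RInt_plusR; [apply IHm|apply H]; lia. }
  induction n; simpl. reflexivity.
  rewrite RInt_plusR, IHn; auto; intros; apply H || apply Hex; lia.
Qed.

Lemma sum_f_R0_limit (F : nat -> R -> R) (L : nat -> R) n :
  (forall i, (i <= n)%nat -> forall e, e > 0 ->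
     exists M, forall v, M <= v -> Rabs (F i v - L i) < e) ->
  forall e, e > 0 ->
  exists M, forall v, M <= v -> Rabs (sum_f_R0 (fun i => F i v) n - sum_f_R0 L n) < e.
Proof.
  induction n; intros H e He; simpl.
  - apply H; auto; lia.
  - destruct (IHn ltac:(intros; apply H; auto; lia) (e / 2) ltac:(lra)) as [M1 H1].
    destruct (H (S n) ltac:(lia) (e / 2) ltac:(lra)) as [M2 H2].
    exists (Rmax M1 M2). intros v Hv.
    specialize (H1 v ltac:(eapply Rle_trans; [apply Rmax_l|exact Hv])).
    specialize (H2 v ltac:(eapply Rle_trans; [apply Rmax_r|exact Hv])).
    apply Rabs_def2 in H1. apply Rabs_def2 in H2. apply Rabs_def1; lra.
Qed.

Lemma Un_cv_le_bound (v : nat -> R) L c n0 :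
  Un_cv v L -> (forall m, (n0 <= m)%nat -> v m <= c) -> L <= c.
Proof.
  intros Hv Hc. apply Rnot_lt_le. intro Hlt.
  destruct (Hv (L - c) ltac:(lra)) as [N HN].
  specialize (HN (max N n0) ltac:(lia)). specialize (Hc (max N n0) ltac:(lia)).
  unfold R_dist in HN. apply Rabs_def2 in HN. lra.
Qed.

Lemma Un_cv_ge_bound (v : nat -> R) L c n0 :
  Un_cv v L -> (forall m, (n0 <= m)%nat -> c <= v m) -> c <= L.
Proof.
  intros Hv Hc. apply Ropp_le_cancel.
  apply (Un_cv_le_bound (fun m => - v m) _ _ n0); [apply CV_opp, Hv|].
  intros m Hm. specialize (Hc m Hm). lra.
Qed.

Lemma series_bounded_cv (w : nat -> R) :
  (forall k, 0 <= w k) -> (exists B, forall n, sum_f_R0 w n <= B) -> exists W, Un_cv (sum_f_R0 w) W.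
Proof.
  intros Hw [B HB]. apply Un_cv_crit. intros n; simpl. specialize (Hw (S n)). lra.
  exists B. intros x [n ->]. apply HB.
Qed.

Lemma series_remainder_lt (w : nat -> R) W : Un_cv (sum_f_R0 w) W ->
  forall e, e > 0 -> exists N, forall n, (N <= n)%nat -> W - sum_f_R0 w n < e.
Proof.
  intros H e He. destruct (H e He) as [N HN]. exists N. intros n Hn.
  specialize (HN n Hn). unfold R_dist in HN. apply Rabs_def2 in HN. lra.
Qed.

Lemma series_remainder_le (u w : nat -> R) W :
  (forall k, 0 <= u k <= w k) -> Un_cv (sum_f_R0 w) W ->
  exists U, Un_cv (sum_f_R0 u) U /\ forall n, 0 <= U - sum_f_R0 u n <= W - sum_f_R0 w n.
Proof.
  intros Hu HW.
  assert (Hu0 : forall k, 0 <= u k) by (intros k; apply Hu).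
  assert (Hw0 : forall k, 0 <= w k) by (intros k; specialize (Hu k); lra).
  assert (Hdiff : forall n m, (n <= m)%nat ->
            sum_f_R0 u m - sum_f_R0 u n <= sum_f_R0 w m - sum_f_R0 w n).
  { intros n m Hnm. induction Hnm. lra. simpl. specialize (Hu (S m)). lra. }
  destruct (series_bounded_cv u Hu0) as [U HU].
  { exists W. intros n. specialize (Hdiff 0%nat n ltac:(lia)). simpl in Hdiff.
    assert (sum_f_R0 w n <= W) by (apply sum_incr; auto). specialize (Hu 0%nat). lra. }
  exists U. split; auto. intros n. split.
  - assert (sum_f_R0 u n <= U) by (apply sum_incr; auto). lra.
  - assert (U <= W - sum_f_R0 w n + sum_f_R0 u n); [|lra].
    apply (Un_cv_le_bound _ _ _ n HU). intros m Hm. specialize (Hdiff n m Hm).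
    assert (sum_f_R0 w m <= W) by (apply sum_incr; auto). lra.
Qed.

(* Unlike prod_f_R0 f n, which has n + 1 factors, prodn f n = f 0 * ... * f (n - 1). *)
Fixpoint prodn (f : nat -> R) (n : nat) : R :=
  match n with 0%nat => 1 | S m => prodn f m * f m end.

Lemma prod_f_R0_prodn f n : prod_f_R0 f n = prodn f (S n).
Proof. induction n; simpl. ring. rewrite IHn. simpl. ring. Qed.

Lemma prodn_ext f g n : (forall i, (i < n)%nat -> f i = g i) -> prodn f n = prodn g n.
Proof. induction n; intros H; simpl. auto. rewrite IHn, H; auto. Qed.

Lemma prodn_nonneg g n : (forall i, 0 <= g i) -> 0 <= prodn g n.
Proof. intros H. induction n; simpl. lra. apply Rmult_le_pos; auto. Qed.

Lemma prodn_le g1 g2 n : (forall i, 0 <= g1 i <= g2 i) -> prodn g1 n <= prodn g2 n.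
Proof.
  intros H. induction n; simpl. lra.
  apply Rmult_le_compat; auto. apply prodn_nonneg; apply H. apply H. apply H.
Qed.

Lemma prodn_unit g n : (forall i, 0 <= g i <= 1) -> 0 <= prodn g n <= 1.
Proof.
  intros H. split. apply prodn_nonneg; apply H.
  rewrite <- (pow1 n). replace (1 ^ n) with (prodn (fun _ => 1) n) by (induction n; simpl; lra).
  apply prodn_le; auto.
Qed.

Lemma prodn_antimono g m n : (forall i, 0 <= g i <= 1) -> (m <= n)%nat -> prodn g n <= prodn g m.
Proof.
  intros H Hmn. induction Hmn. lra. simpl. assert (HH := prodn_unit g m0 H). specialize (H m0).
  assert (prodn g m0 * g m0 <= prodn g m0 * 1) by (apply Rmult_le_compat_l; lra). lra.
Qed.

Lemma prodn_mul_pow (g : nat -> R) t n : prodn (fun i => g i * t) n = prodn g n * t ^ n.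
Proof. induction n; simpl. ring. rewrite IHn. ring. Qed.

Lemma continuousR_prodn (f : nat -> R -> R) n x : (forall i, continuous (f i) x) ->
  continuous (fun t => prodn (fun i => f i t) n) x.
Proof. intros H. induction n; simpl. apply continuousR_const. apply continuousR_mult; auto. Qed.

Lemma prod_f_R0_ext (f g : nat -> R) n :
  (forall i, (i <= n)%nat -> f i = g i) -> prod_f_R0 f n = prod_f_R0 g n.
Proof. induction n; intros H; simpl. apply H; lia. rewrite IHn, H; auto. Qed.

Lemma prod_f_R0_skip (g : nat -> R) k n : (k <= n)%nat ->
  prod_f_R0 (fun i => if Nat.eqb (S i) (S k) then 1 else g i) n * g k = prod_f_R0 g n.
Proof.
  induction n; intros Hk.
  - assert (k = 0%nat) by lia. subst. simpl. ring.
  - destruct (Nat.eq_dec k (S n)).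
    + subst. simpl. rewrite Nat.eqb_refl.
      rewrite (prod_f_R0_ext _ g n). ring. intros i Hi. destruct (Nat.eqb_spec i (S n)). lia. auto.
    + assert (Hf : Nat.eqb (S (S n)) (S k) = false) by (apply Nat.eqb_neq; lia).
      cbn [prod_f_R0]. rewrite Hf. rewrite <- (IHn ltac:(lia)). ring.
Qed.

Fixpoint sum1n (f : nat -> R) (n : nat) : R :=
  match n with 0%nat => 0 | S m => sum1n f m + f (S m) end.

Lemma sum_f_R0_sum1n f N : (1 <= N)%nat -> sum_f_R0 (fun k => f (S k)) (N - 1) = sum1n f N.
Proof.
  intros HN. destruct N. lia. replace (S N - 1)%nat with N by lia. clear HN.
  induction N; simpl. ring. rewrite IHN. simpl. ring.
Qed.

Lemma sum1n_le f g N : (forall k, (1 <= k <= N)%nat -> f k <= g k) -> sum1n f N <= sum1n g N.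
Proof.
  induction N; intros H; simpl. lra.
  assert (H1 := H (S N) ltac:(lia)).
  assert (sum1n f N <= sum1n g N) by (apply IHN; intros; apply H; lia). lra.
Qed.

Lemma sum1n_tail_le f g K N : (K <= N)%nat -> (forall k, (K < k <= N)%nat -> f k <= g k) ->
  sum1n f N - sum1n f K <= sum1n g N - sum1n g K.
Proof.
  intros HKN. induction HKN; intros H. lra. simpl.
  assert (H1 := H (S m) ltac:(lia)).
  assert (sum1n f m - sum1n f K <= sum1n g m - sum1n g K) by (apply IHHKN; intros; apply H; lia).
  lra.
Qed.

Lemma sum1n_le_const f c K : (forall k, (1 <= k <= K)%nat -> f k <= c) -> sum1n f K <= INR K * c.
Proof.
  induction K; intros H; cbn [sum1n]. simpl. lra. rewrite S_INR.
  assert (H1 := H (S K) ltac:(lia)).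
  assert (sum1n f K <= INR K * c) by (apply IHK; intros; apply H; lia). lra.
Qed.

Lemma sum1n_mono f K N : (K <= N)%nat -> (forall k, (1 <= k)%nat -> 0 <= f k) -> sum1n f K <= sum1n f N.
Proof. intros H Hf. induction H. lra. simpl. specialize (Hf (S m) ltac:(lia)). lra. Qed.

Lemma exp_le_mono x y : x <= y -> exp x <= exp y.
Proof. intros [H|H]. left; apply exp_increasing; auto. subst; lra. Qed.

Lemma exp_neg_in_unit t : 0 < t -> 0 < exp (- t) < 1.
Proof. intros Ht. split. apply exp_pos. rewrite <- exp_0. apply exp_increasing. lra. Qed.

Lemma one_minus_exp_neg_bounds x : 0 <= x -> 0 <= 1 - exp (- x) <= x /\ 1 - exp (- x) <= 1.
Proof.
  intros Hx. assert (H1 := exp_ineq1_le (- x)).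
  assert (H2 : exp (- x) <= 1) by (rewrite <- exp_0; apply exp_le_mono; lra).
  assert (H3 := exp_pos (- x)). lra.
Qed.

Lemma rpow_pos_eq x b : 0 < x -> rpow x b = exp (b * ln x).
Proof. intros H. unfold rpow. destruct (Rle_dec x 0). lra. reflexivity. Qed.

Lemma rpow_exp t b : rpow (exp (- t)) b = exp (- (b * t)).
Proof. rewrite rpow_pos_eq by apply exp_pos. rewrite ln_exp. f_equal. ring. Qed.

Lemma rpow_bounds x x1 a1 b : 0 < x -> x <= x1 -> x1 < 1 -> 0 < a1 -> a1 <= b ->
  0 < rpow x b /\ rpow x b <= rpow x1 b /\ rpow x1 b <= rpow x1 a1 /\ rpow x1 a1 < 1.
Proof.
  intros Hx Hx1 H1 Ha1 Hb. rewrite !rpow_pos_eq by lra.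
  assert (Hl : ln x <= ln x1) by (apply ln_le; lra).
  assert (Hl1 : ln x1 < 0) by (rewrite <- ln_1; apply ln_increasing; lra).
  split. apply exp_pos. split. apply exp_le_mono. apply Rmult_le_compat_l; lra.
  split. apply exp_le_mono. nra. rewrite <- exp_0. apply exp_increasing. nra.
Qed.

Lemma continuous_rpow y b : 0 < y -> continuous (fun z => rpow z b) y.
Proof.
  intros Hy. apply (continuousR_ext (fun z => rpow z b) (fun z => exp (b * ln z))).
  - apply (locally_interval _ y 0 p_infty). simpl; auto. simpl; auto.
    intros z Hz _. simpl in Hz. rewrite rpow_pos_eq; auto.
  - apply ex_derive_continuousR. auto_derive. auto.
Qed.

Lemma INR_fact_pos n : 0 < INR (fact n).
Proof. apply lt_0_INR, lt_O_fact. Qed.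

Lemma inv_INR_fact_bounds n : 0 < / INR (fact n) <= 1.
Proof.
  split. apply Rinv_0_lt_compat, INR_fact_pos.
  rewrite <- Rinv_1. apply Rinv_le_contravar. lra. apply (le_INR 1), lt_O_fact.
Qed.

Lemma EU_integrand_head (c : nat -> R) j k t : (1 <= j)%nat ->
  c k * exp (- (c k * t)) * (c k * t) ^ (j - 1) / INR (fact (j - 1)) =
  c k ^ j * t ^ (j - 1) * exp (- (c k * t)) / INR (fact (j - 1)).
Proof.
  intros Hj. replace (c k ^ j) with (c k * c k ^ (j - 1)).
  - rewrite Rpow_mult_distr. field. apply not_0_INR, fact_neq_0.
  - rewrite tech_pow_Rmult. f_equal. lia.
Qed.

Lemma Rabs_mult_sub_le L Lp F Fp C e :
  0 <= Lp <= L -> L <= C -> 0 <= F <= Fp -> Fp <= 1 -> L - Lp <= e -> Fp - F <= e ->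
  Rabs (L * F - Lp * Fp) <= (1 + C) * e.
Proof.
  intros HL HC HF HF1 HLe HFe.
  assert (0 <= (L - Lp) * F <= e) by (split; [apply Rmult_le_pos|]; nra).
  assert (0 <= Lp * (Fp - F) <= C * e) by (split; [apply Rmult_le_pos|]; nra).
  apply Rabs_le. nra.
Qed.

Lemma Rabs_ln_pow_div_bounds x0 x m : 0 < x0 -> x0 <= x < 1 ->
  0 <= Rabs (ln x) ^ m / x <= Rabs (ln x0) ^ m / x0.
Proof.
  intros H0 Hx.
  assert (Hl : ln x < 0) by (rewrite <- ln_1; apply ln_increasing; lra).
  assert (ln x0 <= ln x) by (apply ln_le; lra).
  rewrite !Rabs_left by lra. split.
  - apply Rdiv_le_0_compat; [apply pow_le|]; lra.
  - apply Rmult_le_compat; [apply pow_le; lra|left; apply Rinv_0_lt_compat; lra|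
                            apply pow_incr; lra|apply Rinv_le_contravar; lra].
Qed.

Lemma Rabs_RInt_sub_le (f g : R -> R) d T eps : d <= T -> ex_RInt f d T -> ex_RInt g d T ->
  (forall t, d <= t <= T -> Rabs (f t - g t) <= eps) ->
  Rabs (RInt f d T - RInt g d T) <= (T - d) * eps.
Proof.
  intros HdT Ef Eg H. rewrite <- RInt_minusR by auto.
  apply abs_RInt_le_const; auto. apply ex_RInt_minusR; auto.
Qed.

(** * A sufficient condition on the sequence *)

Section GenericLimit.

Variable a : nat -> R.
Variable j : nat.
Hypothesis j_pos : (1 <= j)%nat.
Hypothesis a_ge1 : forall k, 1 <= a (S k).
Hypothesis a_incr : forall k, a (S k) <= a (S (S k)).

Lemma a_pos k : (1 <= k)%nat -> 0 < a k.
Proof. intros. destruct k. lia. specialize (a_ge1 k). lra. Qed.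

Lemma a_mono k l : (1 <= k)%nat -> (k <= l)%nat -> a k <= a l.
Proof. intros Hk Hkl. induction Hkl. lra. destruct m. lia. specialize (a_incr m). lra. Qed.

Lemma one_minus_exp_a_bounds i t : 0 <= t ->
  0 <= 1 - exp (- (a (S i) * t)) <= 1 /\ 1 - exp (- (a (S i) * t)) <= a (S i) * t.
Proof.
  intros Ht. assert (0 < a (S i)) by (apply a_pos; lia).
  destruct (one_minus_exp_neg_bounds (a (S i) * t)) as [H1 H2]. apply Rmult_le_pos; lra. lra.
Qed.

Definition majorant (k : nat) (t : R) : R :=
  a k ^ j * t ^ (j - 1) * exp (- (a k * t)) / INR (fact (j - 1)) *
  prodn (fun i => 1 - exp (- (a (S i) * t))) (k - 1).

Definition majorant_mass (k : nat) : R :=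
  INR (fact (j + k - 2)) / INR (fact (j - 1)) * prodn (fun i => a (S i)) (k - 1) / a k ^ (k - 1).

Lemma majorant_head_nonneg k t : (1 <= k)%nat -> 0 <= t ->
  0 <= a k ^ j * t ^ (j - 1) * exp (- (a k * t)) / INR (fact (j - 1)).
Proof.
  intros Hk Ht. assert (Hak := a_pos k Hk).
  apply Rdiv_le_0_compat; [|apply INR_fact_pos].
  apply Rmult_le_pos; [apply Rmult_le_pos|]; try (apply pow_le; lra). left; apply exp_pos.
Qed.

Lemma majorant_nonneg k t : (1 <= k)%nat -> 0 <= t -> 0 <= majorant k t.
Proof.
  intros Hk Ht. apply Rmult_le_pos. now apply majorant_head_nonneg.
  apply prodn_unit. intros i. now apply one_minus_exp_a_bounds.
Qed.

Lemma majorant_continuous k t : continuous (majorant k) t.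
Proof.
  apply continuousR_mult.
  - apply ex_derive_continuousR. auto_derive. auto.
  - apply (continuousR_prodn (fun i t => 1 - exp (- (a (S i) * t)))). intros i.
    apply ex_derive_continuousR. auto_derive. auto.
Qed.

Lemma EU_integrand_continuous N k t : continuous (EU_integrand a N j k) t.
Proof.
  apply continuousR_mult.
  - apply ex_derive_continuousR. auto_derive. auto.
  - apply (continuousR_prod (fun i t => if Nat.eqb (S i) k then 1 else 1 - exp (- (a (S i) * t)))).
    intros i _. destruct (Nat.eqb (S i) k). apply continuousR_const.
    apply ex_derive_continuousR. auto_derive. auto.
Qed.

Lemma EU_integrand_bounds N k t : (1 <= k <= N)%nat -> 0 <= t ->
  0 <= EU_integrand a N j k t <= majorant k t.
Proof.
  intros Hk Ht. unfold EU_integrand, majorant. rewrite EU_integrand_head by auto.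
  assert (HA := majorant_head_nonneg k t ltac:(lia) Ht).
  set (g := fun i => if Nat.eqb (S i) k then 1 else 1 - exp (- (a (S i) * t))).
  assert (Hg : forall i, 0 <= g i <= 1).
  { intros i. unfold g. destruct (Nat.eqb (S i) k). lra. now apply one_minus_exp_a_bounds. }
  rewrite prod_f_R0_prodn. fold g.
  assert (E : prodn g (k - 1) = prodn (fun i => 1 - exp (- (a (S i) * t))) (k - 1)).
  { apply prodn_ext. intros i Hi. unfold g. destruct (Nat.eqb_spec (S i) k). lia. auto. }
  assert (HP := prodn_unit g (S (N - 1)) Hg).
  assert (HM := prodn_antimono g (k - 1) (S (N - 1)) Hg ltac:(lia)).
  split. apply Rmult_le_pos; lra.
  apply Rmult_le_compat_l; auto. rewrite <- E. auto.
Qed.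

Lemma majorant_le_pow_exp k t : (1 <= k)%nat -> 0 <= t ->
  majorant k t <= a k ^ j / INR (fact (j - 1)) * prodn (fun i => a (S i)) (k - 1) *
                  (t ^ (j + k - 2) * exp (- (a k * t))).
Proof.
  intros Hk Ht. unfold majorant.
  assert (Hpr : prodn (fun i => 1 - exp (- (a (S i) * t))) (k - 1)
                <= prodn (fun i => a (S i)) (k - 1) * t ^ (k - 1)).
  { rewrite <- prodn_mul_pow. apply prodn_le. intros i.
    destruct (one_minus_exp_a_bounds i t Ht) as [H1 H2]. lra. }
  replace (t ^ (j + k - 2)) with (t ^ (j - 1) * t ^ (k - 1)) by (rewrite <- pow_add; f_equal; lia).
  apply Rle_trans with (a k ^ j * t ^ (j - 1) * exp (- (a k * t)) / INR (fact (j - 1)) *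
                        (prodn (fun i => a (S i)) (k - 1) * t ^ (k - 1))).
  - apply Rmult_le_compat_l; auto. now apply majorant_head_nonneg.
  - right. field. apply not_0_INR, fact_neq_0.
Qed.

Lemma RInt_majorant_le k u V : (1 <= k)%nat -> 0 <= u -> u <= V ->
  RInt (majorant k) u V <= majorant_mass k.
Proof.
  intros Hk Hu HV. assert (Hak := a_pos k Hk).
  set (C := a k ^ j / INR (fact (j - 1)) * prodn (fun i => a (S i)) (k - 1)).
  assert (HC : 0 <= C).
  { apply Rmult_le_pos. apply Rdiv_le_0_compat. apply pow_le; lra. apply INR_fact_pos.
    apply prodn_nonneg. intros i. assert (0 < a (S i)) by (apply a_pos; lia). lra. }
  assert (Hex := fun u v => ex_RInt_on_nonneg (fun t => t ^ (j + k - 2) * exp (- (a k * t))) u v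
                              (fun t _ => continuous_pow_exp _ _ t)).
  apply Rle_trans with (RInt (majorant k) 0 V).
  { apply RInt_nonneg_mono; auto; try lra.
    intros; apply majorant_continuous. intros; now apply majorant_nonneg. }
  apply Rle_trans with (RInt (fun t => C * (t ^ (j + k - 2) * exp (- (a k * t)))) 0 V).
  { apply RInt_le; try lra.
    - apply ex_RInt_on_nonneg; try lra. intros; apply majorant_continuous.
    - apply ex_RInt_scalR, Hex; lra.
    - intros t Ht. now apply majorant_le_pow_exp; try lra. }
  rewrite RInt_scalR by (apply Hex; lra).
  apply Rle_trans with (C * (INR (fact (j + k - 2)) / a k ^ S (j + k - 2))).
  { apply Rmult_le_compat_l; auto. apply RInt_pow_exp_le; lra. }
  right. unfold C, majorant_mass.
  replace (a k ^ S (j + k - 2)) with (a k ^ j * a k ^ (k - 1)) by (rewrite <- pow_add; f_equal; lia).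
  field. repeat split; try (apply pow_nonzero; lra); apply not_0_INR, fact_neq_0.
Qed.

Lemma majorant_mass_pos k : (1 <= k)%nat -> 0 < majorant_mass k.
Proof.
  intros Hk. unfold majorant_mass. apply Rdiv_lt_0_compat; [apply Rmult_lt_0_compat|].
  - apply Rdiv_lt_0_compat; apply INR_fact_pos.
  - clear Hk. induction (k - 1)%nat; simpl. lra. apply Rmult_lt_0_compat; auto. apply a_pos; lia.
  - apply pow_lt, a_pos, Hk.
Qed.

Lemma majorant_mass_S k : (1 <= k)%nat ->
  majorant_mass (S k) = majorant_mass k * (INR (j + k - 1) * (a k / a (S k)) ^ k).
Proof.
  intros Hk. unfold majorant_mass.
  replace (S k - 1)%nat with (S (k - 1)) by lia. simpl prodn.
  replace (j + S k - 2)%nat with (S (j + k - 2)) by lia. rewrite fact_simpl, mult_INR.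
  replace (S (j + k - 2)) with (j + k - 1)%nat by lia.
  replace (S (k - 1)) with k by lia.
  assert (Hak := a_pos k Hk). assert (Hak1 := a_pos (S k) ltac:(lia)).
  unfold Rdiv. rewrite Rpow_mult_distr, pow_inv.
  replace (a k ^ k) with (a k ^ (k - 1) * a k) by (destruct k; [lia|]; simpl; rewrite Nat.sub_0_r; ring).
  field. repeat split; try (apply pow_nonzero; lra); try (apply not_0_INR; apply fact_neq_0); lra.
Qed.

Hypothesis a_moment_bounded : forall x, 0 < x < 1 ->
  exists B, forall n, sum_f_R0 (fun k => a (S k) ^ j * rpow x (a (S k))) n <= B.

Definition xpow x k := rpow x (a (S k)).
Definition Lpart n x := sum_f_R0 (fun k => a (S k) ^ j * xpow x k / (1 - xpow x k)) n.
Definition Fpart n x := prod_f_R0 (fun k => 1 - xpow x k) n.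

Lemma xpow_bounds x x1 k : 0 < x -> x <= x1 -> x1 < 1 ->
  0 < xpow x k /\ xpow x k <= xpow x1 k /\ xpow x1 k <= rpow x1 (a 1) /\ rpow x1 (a 1) < 1.
Proof.
  intros. unfold xpow. apply rpow_bounds; auto. specialize (a_ge1 0). lra. apply a_mono; lia.
Qed.

Lemma a_pow_ge1 k : 1 <= a (S k) ^ j.
Proof. apply pow_R1_Rle, a_ge1. Qed.

Lemma Lpart_unif x1 : 0 < x1 < 1 -> exists Cl (T : nat -> R),
  (forall e, e > 0 -> exists N, forall n, (N <= n)%nat -> T n < e) /\
  forall x, 0 < x <= x1 ->
    0 <= Lfun a j x <= Cl /\ forall n, 0 <= Lfun a j x - Lpart n x <= T n.
Proof.
  intros Hx1.
  set (c := 1 - rpow x1 (a 1)).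
  assert (Hc : 0 < c) by (destruct (xpow_bounds x1 x1 0) as [_ [_ [_ H]]]; unfold c; lra).
  set (w := fun k => a (S k) ^ j * xpow x1 k / c).
  assert (Hw : forall k, 0 <= w k).
  { intros k. destruct (xpow_bounds x1 x1 k) as [H _]; try lra. assert (H1 := a_pow_ge1 k).
    apply Rdiv_le_0_compat; [|lra]. apply Rmult_le_pos; lra. }
  destruct (series_bounded_cv w Hw) as [W HW].
  { destruct (a_moment_bounded x1 Hx1) as [B HB]. exists (B / c). intros n.
    replace (sum_f_R0 w n) with (sum_f_R0 (fun k => a (S k) ^ j * rpow x1 (a (S k))) n / c).
    - apply Rmult_le_compat_r. left; apply Rinv_0_lt_compat; lra. apply HB.
    - unfold w, xpow. clear -Hc. induction n; simpl. reflexivity. rewrite <- IHn. field. lra. }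
  exists W, (fun n => W - sum_f_R0 w n). split; [now apply series_remainder_lt|].
  intros x Hx.
  assert (Hterm : forall k, 0 <= a (S k) ^ j * xpow x k / (1 - xpow x k) <= w k).
  { intros k. destruct (xpow_bounds x x1 k) as [H1 [H2 [H3 H4]]]; try lra.
    assert (H5 := a_pow_ge1 k). split.
    - apply Rdiv_le_0_compat. apply Rmult_le_pos; lra. lra.
    - unfold w, Rdiv. apply Rmult_le_compat. apply Rmult_le_pos; lra.
      left; apply Rinv_0_lt_compat; lra. apply Rmult_le_compat_l; lra.
      apply Rinv_le_contravar. auto. unfold c. lra. }
  destruct (series_remainder_le _ w W Hterm HW) as [U [HU HT]].
  replace (Lfun a j x) with U by (symmetry; apply lim_seq_eq, HU).
  split; [split|exact HT].
  - specialize (HT 0%nat). specialize (Hterm 0%nat). simpl in HT. lra.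
  - apply (Un_cv_le_bound _ _ _ 0 HU). intros m _.
    apply Rle_trans with (sum_f_R0 w m); [|apply sum_incr; auto].
    apply sum_Rle. intros; apply Hterm.
Qed.

Lemma Fpart_S n x : Fpart (S n) x = Fpart n x * (1 - xpow x (S n)).
Proof. reflexivity. Qed.

Lemma Fpart_unit n x : 0 < x < 1 -> 0 <= Fpart n x <= 1.
Proof.
  intros Hx. unfold Fpart. rewrite prod_f_R0_prodn. apply prodn_unit. intros i.
  destruct (xpow_bounds x x i) as [H1 [H2 [H3 H4]]]; lra.
Qed.

Lemma Fpart_increments x x1 n m : 0 < x <= x1 -> x1 < 1 -> (n <= m)%nat ->
  0 <= Fpart n x - Fpart m x <=
  sum_f_R0 (fun k => a (S k) ^ j * xpow x1 k) m - sum_f_R0 (fun k => a (S k) ^ j * xpow x1 k) n.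
Proof.
  intros Hx Hx1 Hnm. induction Hnm. lra.
  rewrite Fpart_S. simpl sum_f_R0.
  destruct (xpow_bounds x x1 (S m)) as [H1 [H2 [H3 H4]]]; try lra.
  assert (H5 := a_pow_ge1 (S m)). assert (HF := Fpart_unit m x ltac:(lra)).
  assert (xpow x1 (S m) <= a (S (S m)) ^ j * xpow x1 (S m)) by nra.
  assert (Fpart m x * xpow x (S m) <= xpow x (S m)) by nra.
  assert (0 <= Fpart m x * xpow x (S m)) by nra.
  lra.
Qed.

Lemma Fpart_unif x1 : 0 < x1 < 1 -> exists (T : nat -> R),
  (forall e, e > 0 -> exists N, forall n, (N <= n)%nat -> T n < e) /\
  forall x, 0 < x <= x1 -> 0 <= Ffun a x /\ forall n, 0 <= Fpart n x - Ffun a x <= T n.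
Proof.
  intros Hx1.
  set (w := fun k => a (S k) ^ j * xpow x1 k).
  assert (Hw : forall k, 0 <= w k).
  { intros k. destruct (xpow_bounds x1 x1 k) as [H _]; try lra.
    assert (H1 := a_pow_ge1 k). unfold w. apply Rmult_le_pos; lra. }
  destruct (series_bounded_cv w Hw) as [W HW]. { apply a_moment_bounded; auto. }
  exists (fun n => W - sum_f_R0 w n). split; [now apply series_remainder_lt|].
  intros x Hx.
  assert (Hdiff := fun n m => Fpart_increments x x1 n m Hx ltac:(lra)).
  assert (HF01 := fun n => Fpart_unit n x ltac:(lra)).
  destruct (growing_cv (fun n => - Fpart n x)) as [mF HmF].
  { intros n. simpl. specialize (Hdiff n (S n) ltac:(lia)). lra. }
  { exists 0. intros y [n ->]. specialize (HF01 n). lra. }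
  assert (HF : Un_cv (fun n => Fpart n x) (- mF)).
  { replace (fun n => Fpart n x) with (fun n => - - Fpart n x)
      by (apply functional_extensionality; intros; ring).
    apply CV_opp, HmF. }
  replace (Ffun a x) with (- mF) by (symmetry; apply lim_seq_eq, HF).
  split; [apply (Un_cv_ge_bound _ _ _ 0 HF); intros; apply HF01|]. intros n. split.
  - assert (- mF <= Fpart n x); [|lra]. apply (Un_cv_le_bound _ _ _ n HF). intros m Hm.
    specialize (Hdiff n m Hm). lra.
  - assert (Fpart n x - W + sum_f_R0 w n <= - mF); [|lra].
    apply (Un_cv_ge_bound _ _ _ n HF). intros m Hm. specialize (Hdiff n m Hm).
    assert (sum_f_R0 w m <= W) by (apply sum_incr; auto). unfold w in *. lra.
Qed.

Definition Ipart n x :=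
  / INR (fact (j - 1)) * (Lpart n x * Fpart n x * (Rabs (ln x)) ^ (j - 1) / x).
Definition Gpart n t := Ipart n (exp (- t)) * exp (- t).
Definition Gfun t := I_integrand a j (exp (- t)) * exp (- t).
Definition EU_sum N t := sum_f_R0 (fun k => EU_integrand a N j (S k) t) (N - 1).

Lemma EU_sum_Gpart N t : (1 <= N)%nat -> 0 < t -> EU_sum N t = Gpart (N - 1) t.
Proof.
  intros HN Ht. unfold EU_sum, Gpart, Ipart, Lpart, Fpart, xpow.
  rewrite ln_exp, Rabs_left, Ropp_involutive by lra.
  set (n := (N - 1)%nat).
  set (g := fun i => 1 - exp (- (a (S i) * t))).
  assert (Hg : forall k, g k <> 0).
  { intros k. unfold g. assert (0 < a (S k)) by (apply a_pos; lia).
    assert (exp (- (a (S k) * t)) < 1) by (rewrite <- exp_0; apply exp_increasing; nra). lra. }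
  rewrite (prod_f_R0_ext _ g n) by (intros i _; unfold g; now rewrite rpow_exp).
  rewrite (sum_eq (fun k => a (S k) ^ j * rpow (exp (- t)) (a (S k)) / (1 - rpow (exp (- t)) (a (S k))))
                  (fun k => a (S k) ^ j * exp (- (a (S k) * t)) / g k) n)
    by (intros i _; unfold g; now rewrite !rpow_exp).
  rewrite (sum_eq _ (fun k => a (S k) ^ j * exp (- (a (S k) * t)) / g k *
                              (t ^ (j - 1) / INR (fact (j - 1)) * prod_f_R0 g n)) n).
  - rewrite <- (scal_sum (fun k => a (S k) ^ j * exp (- (a (S k) * t)) / g k) n).
    field. split. apply Rgt_not_eq, exp_pos. apply not_0_INR, fact_neq_0.
  - intros k Hk. unfold EU_integrand. rewrite EU_integrand_head by auto.
    fold n. rewrite <- (prod_f_R0_skip g k n Hk). unfold g.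
    field. split; [apply not_0_INR, fact_neq_0|apply Hg].
Qed.

Lemma Ipart_continuous n y : 0 < y < 1 -> continuous (Ipart n) y.
Proof.
  intros Hy. apply continuousR_mult; [apply continuousR_const|].
  apply continuousR_div; [|apply continuousR_id|lra].
  repeat apply continuousR_mult.
  - apply (continuousR_sum (fun k y => a (S k) ^ j * xpow y k / (1 - xpow y k))).
    intros i _. destruct (xpow_bounds y y i) as [_ [_ [_ H]]]; try lra.
    apply continuousR_div. apply continuousR_mult. apply continuousR_const. apply continuous_rpow; lra.
    apply continuousR_minus. apply continuousR_const. apply continuous_rpow; lra.
    destruct (xpow_bounds y y i) as [H1 [H2 [H3 H4]]]; lra.
  - apply (continuousR_prod (fun k y => 1 - xpow y k)). intros i _.
    apply continuousR_minus. apply continuousR_const. apply continuous_rpow; lra.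
  - apply continuousR_pow. apply (continuousR_comp ln Rabs).
    apply ex_derive_continuousR. auto_derive. lra. apply continuous_Rabs.
Qed.

Lemma Lpart_nonneg n x : 0 < x < 1 -> 0 <= Lpart n x.
Proof.
  intros Hx. unfold Lpart. apply cond_pos_sum. intros k.
  destruct (xpow_bounds x x k) as [H1 [H2 [H3 H4]]]; try lra. assert (H5 := a_pow_ge1 k).
  apply Rdiv_le_0_compat; [apply Rmult_le_pos|]; lra.
Qed.

Lemma Ipart_unif x0 x1 : 0 < x0 -> x0 <= x1 -> x1 < 1 -> forall e, e > 0 ->
  exists N, forall n x, (N <= n)%nat -> x0 <= x <= x1 -> Rabs (I_integrand a j x - Ipart n x) < e.
Proof.
  intros H0 H01 H1 e He.
  destruct (Lpart_unif x1 ltac:(lra)) as [Cl [TL [HTL HL]]].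
  destruct (Fpart_unif x1 ltac:(lra)) as [TF [HTF HF]].
  set (K := Rabs (ln x0) ^ (j - 1) / x0).
  assert (HK : 0 <= K) by (apply Rdiv_le_0_compat; [apply pow_le, Rabs_pos|lra]).
  assert (HCl : 0 <= Cl) by (destruct (HL x1 ltac:(lra)) as [H _]; lra).
  set (e' := e / ((K + 1) * (Cl + 1))).
  assert (He' : 0 < e') by (apply Rdiv_lt_0_compat; nra).
  destruct (HTL e' He') as [N1 HN1]. destruct (HTF e' He') as [N2 HN2].
  exists (max N1 N2). intros n x Hn Hx.
  destruct (HL x ltac:(lra)) as [HLb HLt]. specialize (HLt n).
  destruct (HF x ltac:(lra)) as [HF0 HFt]. specialize (HFt n).
  specialize (HN1 n ltac:(lia)). specialize (HN2 n ltac:(lia)).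
  assert (HLp := Lpart_nonneg n x ltac:(lra)).
  assert (HFp := Fpart_unit n x ltac:(lra)).
  assert (HLF := Rabs_mult_sub_le (Lfun a j x) (Lpart n x) (Ffun a x) (Fpart n x) Cl e'
                   ltac:(lra) ltac:(lra) ltac:(lra) ltac:(lra) ltac:(lra) ltac:(lra)).
  set (P := Rabs (ln x) ^ (j - 1) / x).
  assert (HP : 0 <= P <= K) by (apply Rabs_ln_pow_div_bounds; lra).
  destruct (inv_INR_fact_bounds (j - 1)) as [Hc0 Hc1].
  unfold I_integrand, Ipart.
  replace (/ INR (fact (j - 1)) * (Lfun a j x * Ffun a x * Rabs (ln x) ^ (j - 1) / x) -
           / INR (fact (j - 1)) * (Lpart n x * Fpart n x * Rabs (ln x) ^ (j - 1) / x))
    with (/ INR (fact (j - 1)) * P * (Lfun a j x * Ffun a x - Lpart n x * Fpart n x))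
    by (unfold P; field; split; [lra|apply not_0_INR, fact_neq_0]).
  rewrite Rabs_mult, (Rabs_pos_eq (/ INR (fact (j - 1)) * P)) by nra.
  apply Rle_lt_trans with (K * ((1 + Cl) * e')).
  - apply Rmult_le_compat; try nra. apply Rabs_pos.
  - replace (K * ((1 + Cl) * e')) with (e * (K / (K + 1))) by (unfold e'; field; lra).
    assert (K / (K + 1) < 1) by (apply (Rmult_lt_reg_r (K + 1)); [lra|]; field_simplify; lra).
    nra.
Qed.

Lemma I_integrand_continuous x : 0 < x < 1 -> continuous (I_integrand a j) x.
Proof.
  intros Hx. apply continuity_pt_filterlim.
  assert (Hr0 : 0 < Rmin x (1 - x) / 2) by (apply Rdiv_lt_0_compat; [apply Rmin_glb_lt|]; lra).
  set (r := mkposreal _ Hr0).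
  assert (Hr1 : r <= x / 2) by (simpl; assert (Rmin x (1 - x) <= x) by apply Rmin_l; lra).
  assert (Hr2 : r <= (1 - x) / 2) by (simpl; assert (Rmin x (1 - x) <= 1 - x) by apply Rmin_r; lra).
  apply (CVU_continuity Ipart (I_integrand a j) x r).
  - intros e He.
    destruct (Ipart_unif (x - r) (x + r) ltac:(lra) ltac:(simpl in *; lra) ltac:(lra) e He)
      as [N HN].
    exists N. intros n y Hn Hy. unfold Boule in Hy. apply Rabs_def2 in Hy. apply HN; auto. lra.
  - intros n y Hy. unfold Boule in Hy. apply Rabs_def2 in Hy. apply continuity_pt_filterlim.
    apply Ipart_continuous. lra.
  - unfold Boule. rewrite Rminus_diag, Rabs_R0. apply cond_pos.
Qed.

Lemma Gfun_continuous t : 0 < t -> continuous Gfun t.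
Proof.
  intros Ht. apply continuousR_mult.
  - apply (continuousR_comp (fun t => exp (- t)) (I_integrand a j)).
    apply ex_derive_continuousR. auto_derive. auto.
    now apply I_integrand_continuous, exp_neg_in_unit.
  - apply ex_derive_continuousR. auto_derive. auto.
Qed.

Lemma Gpart_continuous n t : 0 < t -> continuous (Gpart n) t.
Proof.
  intros Ht. apply continuousR_mult.
  - apply (continuousR_comp (fun t => exp (- t)) (Ipart n)).
    apply ex_derive_continuousR. auto_derive. auto.
    now apply Ipart_continuous, exp_neg_in_unit.
  - apply ex_derive_continuousR. auto_derive. auto.
Qed.

Lemma Gpart_unif d T : 0 < d -> d <= T -> forall e, e > 0 ->
  exists N, forall n t, (N <= n)%nat -> d <= t <= T -> Rabs (Gfun t - Gpart n t) < e.
Proof.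
  intros Hd HdT e He.
  assert (Hx01 : exp (- T) <= exp (- d)) by (apply exp_le_mono; lra).
  destruct (Ipart_unif _ _ (exp_pos _) Hx01 (proj2 (exp_neg_in_unit d Hd)) e He) as [N HN].
  exists N. intros n t Hn Ht.
  unfold Gfun, Gpart. rewrite <- Rmult_minus_distr_r, Rabs_mult, (Rabs_pos_eq (exp (- t)))
    by (left; apply exp_pos).
  assert (HH := HN n (exp (- t)) Hn ltac:(split; apply exp_le_mono; lra)).
  destruct (exp_neg_in_unit t ltac:(lra)).
  assert (0 <= Rabs (I_integrand a j (exp (- t)) - Ipart n (exp (- t)))) by apply Rabs_pos.
  nra.
Qed.

Lemma Gfun_nonneg t : 0 < t -> 0 <= Gfun t.
Proof.
  intros Ht. unfold Gfun, I_integrand.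
  set (x := exp (- t)). assert (Hx : 0 < x < 1) by now apply exp_neg_in_unit.
  destruct (Lpart_unif x Hx) as [Cl [TL [_ HL]]].
  destruct (Fpart_unif x Hx) as [TF [_ HF]].
  destruct (HL x ltac:(lra)) as [HLb _]. destruct (HF x ltac:(lra)) as [HF0 _].
  destruct (inv_INR_fact_bounds (j - 1)).
  apply Rmult_le_pos; [|lra]. apply Rmult_le_pos; [lra|].
  apply Rdiv_le_0_compat; [|lra]. apply Rmult_le_pos; [apply Rmult_le_pos; lra|].
  apply pow_le, Rabs_pos.
Qed.

Lemma EU_sum_continuous N t : continuous (EU_sum N) t.
Proof.
  apply (continuousR_sum (fun k t => EU_integrand a N j (S k) t)). intros. apply EU_integrand_continuous.
Qed.

Lemma majorant_mass_geometric K0 :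
  (forall k, (K0 <= k)%nat -> INR (j + k - 1) * (a k / a (S k)) ^ k <= 1 / 2) ->
  (1 <= K0)%nat -> forall k, (K0 <= k)%nat -> majorant_mass k <= majorant_mass K0 * (1 / 2) ^ (k - K0).
Proof.
  intros Hr HK0 k Hk. induction Hk.
  - rewrite Nat.sub_diag. simpl. lra.
  - rewrite majorant_mass_S by lia. replace (S m - K0)%nat with (S (m - K0)) by lia. simpl.
    assert (0 <= INR (j + m - 1) * (a m / a (S m)) ^ m).
    { apply Rmult_le_pos. apply pos_INR. apply pow_le.
      apply Rdiv_le_0_compat; [left|]; apply a_pos; lia. }
    assert (0 < majorant_mass m) by (apply majorant_mass_pos; lia).
    specialize (Hr m Hk).
    apply Rle_trans with (majorant_mass m * (1 / 2)); [apply Rmult_le_compat_l; lra|].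
    assert (0 <= majorant_mass K0 * (1 / 2) ^ (m - K0)).
    { apply Rmult_le_pos; [left; apply majorant_mass_pos; lia| apply pow_le; lra]. }
    nra.
Qed.

Lemma majorant_mass_tail K0 :
  (forall k, (K0 <= k)%nat -> INR (j + k - 1) * (a k / a (S k)) ^ k <= 1 / 2) ->
  (1 <= K0)%nat -> forall K N, (K0 <= K)%nat -> (K <= N)%nat ->
  sum1n majorant_mass N - sum1n majorant_mass K <=
  majorant_mass K0 * ((1 / 2) ^ (K - K0) - (1 / 2) ^ (N - K0)).
Proof.
  intros Hr HK0 K N HK HKN. induction HKN.
  - lra.
  - cbn [sum1n]. assert (H := majorant_mass_geometric K0 Hr HK0 (S m) ltac:(lia)).
    replace (S m - K0)%nat with (S (m - K0)) in * by lia. cbn [pow] in *. nra.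
Qed.

Hypothesis a_ratio : exists K0, (1 <= K0)%nat /\
  forall k, (K0 <= k)%nat -> INR (j + k - 1) * (a k / a (S k)) ^ k <= 1 / 2.

Lemma majorant_mass_tail_small e : e > 0 -> exists K, (1 <= K)%nat /\
  forall N, (K <= N)%nat -> sum1n majorant_mass N - sum1n majorant_mass K <= e.
Proof.
  intros He. destruct a_ratio as [K0 [H1 Hr]].
  assert (HD := majorant_mass_pos K0 H1).
  destruct (pow_lt_1_zero (1 / 2) ltac:(rewrite Rabs_pos_eq; lra) (e / majorant_mass K0)
              ltac:(apply Rdiv_lt_0_compat; lra)) as [M HM].
  exists (K0 + M)%nat. split. lia. intros N HN.
  assert (H := majorant_mass_tail K0 Hr H1 (K0 + M) N ltac:(lia) HN).
  replace (K0 + M - K0)%nat with M in H by lia.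
  specialize (HM M ltac:(lia)). rewrite Rabs_pos_eq in HM by (apply pow_le; lra).
  assert (0 <= (1 / 2) ^ (N - K0)) by (apply pow_le; lra).
  assert (majorant_mass K0 * (1 / 2) ^ M < e).
  { apply (Rmult_lt_reg_r (/ majorant_mass K0)). apply Rinv_0_lt_compat; lra.
    replace (majorant_mass K0 * (1 / 2) ^ M * / majorant_mass K0) with ((1 / 2) ^ M)
      by (field; lra). unfold Rdiv in HM. lra. }
  nra.
Qed.

Lemma majorant_mass_sum_bounded : exists B, forall N, sum1n majorant_mass N <= B.
Proof.
  destruct a_ratio as [K0 [H1 Hr]].
  assert (HD := majorant_mass_pos K0 H1).
  exists (sum1n majorant_mass K0 + majorant_mass K0). intros N.
  destruct (Compare_dec.le_lt_dec K0 N) as [HN|HN].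
  - assert (H := majorant_mass_tail K0 Hr H1 K0 N ltac:(lia) HN).
    rewrite Nat.sub_diag in H. simpl in H.
    assert (0 <= (1 / 2) ^ (N - K0)) by (apply pow_le; lra). nra.
  - assert (sum1n majorant_mass N <= sum1n majorant_mass K0); [|lra].
    apply sum1n_mono; [lia|intros; left; apply majorant_mass_pos; auto].
Qed.

Lemma majorant_le_a_pow k t : (1 <= k)%nat -> 0 <= t <= 1 -> majorant k t <= a k ^ j.
Proof.
  intros Hk Ht. assert (Hak := a_pos k Hk).
  replace (majorant k t) with (a k ^ j * (t ^ (j - 1) * exp (- (a k * t)) * / INR (fact (j - 1)) *
    prodn (fun i => 1 - exp (- (a (S i) * t))) (k - 1))) by (unfold majorant, Rdiv; ring).
  set (u1 := t ^ (j - 1)). set (u2 := exp (- (a k * t))). set (u3 := / INR (fact (j - 1))).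
  set (u4 := prodn (fun i => 1 - exp (- (a (S i) * t))) (k - 1)).
  assert (H1 : 0 <= u1 <= 1).
  { split; [apply pow_le; lra|rewrite <- (pow1 (j - 1)); apply pow_incr; lra]. }
  assert (H2 : 0 <= u2 <= 1).
  { split; [left; apply exp_pos|rewrite <- exp_0; apply exp_le_mono; nra]. }
  assert (H3 : 0 <= u3 <= 1) by (destruct (inv_INR_fact_bounds (j - 1)); unfold u3; lra).
  assert (H4 : 0 <= u4 <= 1) by (apply prodn_unit; intros i; apply one_minus_exp_a_bounds; lra).
  assert (Hm : forall x y, 0 <= x <= 1 -> 0 <= y <= 1 -> 0 <= x * y <= 1).
  { intros x y Hx Hy. split; [apply Rmult_le_pos|rewrite <- (Rmult_1_r 1); apply Rmult_le_compat]; lra. }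
  assert (0 <= u1 * u2 * u3 * u4 <= 1) by (repeat apply Hm; auto).
  assert (0 <= a k ^ j) by (apply pow_le; lra). nra.
Qed.

Lemma RInt_majorant_near0 K e : e > 0 ->
  exists d, 0 < d <= 1 /\ sum1n (fun k => RInt (majorant k) 0 d) K <= e.
Proof.
  intros He. set (A := Rabs (a K ^ j)).
  assert (HA : 0 <= A) by apply Rabs_pos.
  assert (HKA : 0 <= INR K * A) by (apply Rmult_le_pos; [apply pos_INR|auto]).
  set (d := Rmin 1 (e / (INR K * A + 1))).
  assert (Hd1 : d <= 1) by apply Rmin_l.
  assert (Hd2 : d <= e / (INR K * A + 1)) by apply Rmin_r.
  assert (Hd0 : 0 < d) by (apply Rmin_glb_lt; [lra| apply Rdiv_lt_0_compat; lra]).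
  exists d. split. lra.
  apply Rle_trans with (INR K * (d * A)).
  - apply sum1n_le_const. intros k Hk.
    apply Rle_trans with (RInt (fun _ => a k ^ j) 0 d).
    + apply RInt_le. lra. apply ex_RInt_on_nonneg; [intros; apply majorant_continuous|lra|lra].
      apply ex_RInt_contR. intros; apply continuousR_const.
      intros t Ht. apply majorant_le_a_pow; [lia|lra].
    + rewrite RInt_constR, Rminus_0_r. apply Rmult_le_compat_l. lra.
      apply Rle_trans with (a K ^ j); [|apply Rle_abs].
      apply pow_incr. split; [left; apply a_pos|apply a_mono]; lia.
  - assert (d * (INR K * A + 1) <= e).
    { apply (Rmult_le_compat_r (INR K * A + 1)) in Hd2; [|lra]. unfold Rdiv in Hd2.
      rewrite Rmult_assoc, Rinv_l in Hd2; lra. }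
    nra.
Qed.

Lemma majorant_le_pow_exp_a1 k K T t : (1 <= k <= K)%nat -> 1 <= T <= t ->
  majorant k t <= a K ^ j / T * (t ^ j * exp (- (a 1 * t))).
Proof.
  intros Hk Ht. unfold majorant.
  assert (Hak := a_pos k ltac:(lia)). assert (Ha1 := a_pos 1 ltac:(lia)).
  assert (Ha1k : a 1 <= a k) by (apply a_mono; lia).
  assert (HP : 0 <= prodn (fun i => 1 - exp (- (a (S i) * t))) (k - 1) <= 1).
  { apply prodn_unit. intros i. apply one_minus_exp_a_bounds; lra. }
  destruct (inv_INR_fact_bounds (j - 1)) as [HI HI'].
  assert (Hakj : 0 <= a k ^ j <= a K ^ j).
  { split. apply pow_le; lra. apply pow_incr. split; [lra|apply a_mono; lia]. }
  assert (He : 0 < exp (- (a k * t)) <= exp (- (a 1 * t))) by (split; [apply exp_pos|apply exp_le_mono; nra]).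
  assert (Htj : 0 <= t ^ (j - 1) <= t ^ j / T).
  { split. apply pow_le; lra.
    replace (t ^ j) with (t * t ^ (j - 1)) by (rewrite tech_pow_Rmult; f_equal; lia).
    apply (Rmult_le_reg_r T). lra. unfold Rdiv. rewrite Rmult_assoc, Rinv_l by lra.
    assert (0 <= t ^ (j - 1)) by (apply pow_le; lra). nra. }
  unfold Rdiv in *.
  set (P := prodn (fun i => 1 - exp (- (a (S i) * t))) (k - 1)) in *.
  set (I := / INR (fact (j - 1))) in *.
  set (E1 := exp (- (a k * t))) in *. set (E2 := exp (- (a 1 * t))) in *.
  set (Q := t ^ (j - 1)) in *. set (tj := t ^ j) in *.
  assert (0 <= tj * / T) by lra.
  assert (a k ^ j * Q * E1 * I * P <= a k ^ j * Q * E1).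
  { assert (0 <= a k ^ j * Q * E1) by (repeat apply Rmult_le_pos; lra).
    assert (I * P <= 1) by nra. nra. }
  assert (a k ^ j * Q * E1 <= a K ^ j * (tj * / T) * E2).
  { apply Rmult_le_compat; try lra. apply Rmult_le_pos; lra. apply Rmult_le_compat; lra. }
  replace (a K ^ j * / T * (tj * E2)) with (a K ^ j * (tj * / T) * E2) by ring. lra.
Qed.

Lemma RInt_majorant_near_infty K e : e > 0 ->
  exists T, 1 <= T /\ forall v, T <= v -> sum1n (fun k => RInt (majorant k) T v) K <= e.
Proof.
  intros He. set (A := Rabs (a K ^ j)).
  assert (HA : 0 <= A) by apply Rabs_pos.
  assert (HAK : a K ^ j <= A) by apply Rle_abs.
  assert (Ha1 := a_pos 1 ltac:(lia)).
  set (G := INR (fact j) / a 1 ^ S j).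
  assert (HG : 0 <= G) by (apply Rdiv_le_0_compat; [left; apply INR_fact_pos| apply pow_lt; lra]).
  set (C := INR K * A * G).
  assert (HC : 0 <= C) by (apply Rmult_le_pos; [apply Rmult_le_pos; [apply pos_INR|]|]; auto).
  set (T := Rmax 1 (C / e + 1)).
  assert (HT1 : 1 <= T) by apply Rmax_l. assert (HT2 : C / e + 1 <= T) by apply Rmax_r.
  assert (Hpe := fun t (_ : 0 <= t) => continuous_pow_exp j (a 1) t).
  exists T. split; auto. intros v Hv.
  apply Rle_trans with (INR K * (A / T * G)).
  - apply sum1n_le_const. intros k Hk.
    apply Rle_trans with (RInt (fun t => A / T * (t ^ j * exp (- (a 1 * t)))) T v).
    + apply RInt_le. lra. apply ex_RInt_on_nonneg; [intros; apply majorant_continuous|lra|lra].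
      apply ex_RInt_scalR, ex_RInt_on_nonneg; auto; lra.
      intros t Ht. apply Rle_trans with (a K ^ j / T * (t ^ j * exp (- (a 1 * t)))).
      * apply majorant_le_pow_exp_a1; lia || lra.
      * apply Rmult_le_compat_r. apply Rmult_le_pos; [apply pow_le; lra|left; apply exp_pos].
        unfold Rdiv. apply Rmult_le_compat_r; [left; apply Rinv_0_lt_compat|]; lra.
    + rewrite RInt_scalR by (apply ex_RInt_on_nonneg; auto; lra).
      apply Rmult_le_compat_l. apply Rdiv_le_0_compat; lra.
      apply Rle_trans with (RInt (fun t => t ^ j * exp (- (a 1 * t))) 0 v).
      * apply RInt_nonneg_mono; auto; try lra.
        intros. apply Rmult_le_pos. apply pow_le; lra. left; apply exp_pos.
      * apply RInt_pow_exp_le; lra.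
  - replace (INR K * (A / T * G)) with (C / T) by (unfold C; field; lra).
    apply (Rmult_le_reg_r T). lra. unfold Rdiv. rewrite Rmult_assoc, Rinv_l by lra.
    assert (C <= e * (T - 1)); [|nra].
    apply (Rmult_le_reg_r (/ e)). apply Rinv_0_lt_compat; lra.
    replace (e * (T - 1) * / e) with (T - 1) by (field; lra). unfold Rdiv in HT2. lra.
Qed.

Lemma RInt_EU_sum_bounds N u v : (1 <= N)%nat -> 0 <= u -> u <= v ->
  0 <= RInt (EU_sum N) u v <= sum1n (fun k => RInt (majorant k) u v) N.
Proof.
  intros HN Hu Hv.
  unfold EU_sum. rewrite RInt_sum_f_R0
    by (intros; apply ex_RInt_on_nonneg; [intros; apply EU_integrand_continuous|lra|lra]).
  rewrite <- (sum_f_R0_sum1n (fun k => RInt (majorant k) u v) N HN).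
  assert (Hb : forall i, (i <= N - 1)%nat ->
            0 <= RInt (EU_integrand a N j (S i)) u v <= RInt (majorant (S i)) u v).
  { intros i Hi.
    assert (Hbd := fun t (Ht : u <= t) => EU_integrand_bounds N (S i) t ltac:(lia) ltac:(lra)).
    split.
    - apply RInt_ge_0; auto.
      apply ex_RInt_on_nonneg; [intros; apply EU_integrand_continuous|lra|lra].
      intros t Ht. apply Hbd; lra.
    - apply RInt_le; auto.
      apply ex_RInt_on_nonneg; [intros; apply EU_integrand_continuous|lra|lra].
      apply ex_RInt_on_nonneg; [intros; apply majorant_continuous|lra|lra].
      intros t Ht. apply Hbd; lra. }
  split.
  - rewrite <- (Rmult_0_l (INR (S (N - 1)))), <- sum_cte. apply sum_Rle. intros; apply Hb; auto.
  - apply sum_Rle. intros; apply Hb; auto.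
Qed.

Lemma RInt_EU_sum_bounded : exists B, forall N u v, (1 <= N)%nat -> 0 <= u -> u <= v ->
  RInt (EU_sum N) u v <= B.
Proof.
  destruct majorant_mass_sum_bounded as [B HB]. exists B. intros N u v HN Hu Hv.
  eapply Rle_trans; [apply (RInt_EU_sum_bounds N u v HN Hu Hv)|].
  eapply Rle_trans; [|apply (HB N)].
  apply sum1n_le. intros k Hk. apply RInt_majorant_le; lia || lra.
Qed.

Lemma EU_integrand_ImpIntInf N k : (1 <= k <= N)%nat ->
  exists l, ImpIntInf (EU_integrand a N j k) 0 l.
Proof.
  intros Hk. apply (ImpIntInf_of_bounded_nonneg _ (majorant_mass k)).
  - intros; apply EU_integrand_continuous.
  - intros t Ht. now apply EU_integrand_bounds.
  - intros V HV. apply Rle_trans with (RInt (majorant k) 0 V).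
    + apply RInt_le; auto.
      * apply ex_RInt_on_nonneg; [intros; apply EU_integrand_continuous|lra|lra].
      * apply ex_RInt_on_nonneg; [intros; apply majorant_continuous|lra|lra].
      * intros t Ht. apply EU_integrand_bounds; auto; lra.
    + apply RInt_majorant_le; lia || lra.
Qed.

Lemma RInt_EU_sum_cv N : (1 <= N)%nat -> forall e, e > 0 ->
  exists M, forall v, M <= v -> Rabs (RInt (EU_sum N) 0 v - EU a j N) < e.
Proof.
  intros HN e He.
  assert (Hcont := fun i t (_ : 0 <= t) => EU_integrand_continuous N (S i) t).
  destruct (sum_f_R0_limit (fun i v => RInt (EU_integrand a N j (S i)) 0 (Rmax v 0))
             (fun i => imp_int_inf (EU_integrand a N j (S i)) 0) (N - 1)) with (e := e)
    as [M HM]; auto.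
  { intros i Hi e' He'. destruct (EU_integrand_ImpIntInf N (S i) ltac:(lia)) as [l Hl].
    rewrite (imp_int_inf_eq _ _ _ Hl).
    destruct (proj1 (ImpIntInf_RInt _ _ (Hcont i)) Hl e' He') as [M HM].
    exists M. intros v Hv. apply HM; [eapply Rle_trans; [exact Hv|apply Rmax_l]|apply Rmax_r]. }
  exists (Rmax M 0). intros v Hv.
  assert (Hv0' : 0 <= v) by (eapply Rle_trans; [apply Rmax_r|exact Hv]).
  assert (Hv0 : Rmax v 0 = v) by (apply Rmax_left; lra).
  specialize (HM v ltac:(eapply Rle_trans; [apply Rmax_l|exact Hv])). rewrite Hv0 in HM.
  unfold EU_sum, EU. rewrite RInt_sum_f_R0; auto.
  intros. apply ex_RInt_on_nonneg; auto; lra.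
Qed.

Lemma ex_RInt_Gfun d T : 0 < d -> d <= T -> ex_RInt Gfun d T.
Proof.
  intros Hd HdT. apply ex_RInt_contR. intros z Hz. apply Gfun_continuous.
  rewrite Rmin_left in Hz; lra.
Qed.

Lemma ex_RInt_Gpart n d T : 0 < d -> d <= T -> ex_RInt (Gpart n) d T.
Proof.
  intros Hd HdT. apply ex_RInt_contR. intros z Hz. apply Gpart_continuous.
  rewrite Rmin_left in Hz; lra.
Qed.

Lemma RInt_Gfun_EU_sum_close d T : 0 < d -> d <= T -> forall e, e > 0 ->
  exists N0, forall N, (N0 <= N)%nat -> Rabs (RInt Gfun d T - RInt (EU_sum N) d T) <= e.
Proof.
  intros Hd HdT e He.
  destruct (Gpart_unif d T Hd HdT (e / (T - d + 1)) ltac:(apply Rdiv_lt_0_compat; lra)) as [N0 HN0].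
  exists (S N0). intros N HN.
  rewrite (RInt_extR (EU_sum N) (Gpart (N - 1))).
  2: { intros x Hx. rewrite Rmin_left in Hx by lra. apply EU_sum_Gpart; [lia|lra]. }
  eapply Rle_trans.
  - apply Rabs_RInt_sub_le; auto. apply ex_RInt_Gfun; auto. apply ex_RInt_Gpart; auto.
    intros t Ht. left. apply HN0; auto. lia.
  - apply (Rmult_le_reg_r (T - d + 1)). lra.
    replace ((T - d) * (e / (T - d + 1)) * (T - d + 1)) with ((T - d) * e) by (field; lra).
    nra.
Qed.

Lemma RInt_Gfun_bounded : exists B, forall d T, 0 < d -> d <= T -> RInt Gfun d T <= B.
Proof.
  destruct RInt_EU_sum_bounded as [B HB]. exists B. intros d T Hd HdT.
  apply Rnot_lt_le. intro Hlt.
  destruct (RInt_Gfun_EU_sum_close d T Hd HdT ((RInt Gfun d T - B) / 2) ltac:(lra)) as [N0 HN0].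
  specialize (HN0 (S N0) ltac:(lia)). specialize (HB (S N0) d T ltac:(lia) ltac:(lra) HdT).
  assert (H := Rle_abs (RInt Gfun d T - RInt (EU_sum (S N0)) d T)). lra.
Qed.

Lemma RInt_Gfun_mono d' d T T' : 0 < d' -> d' <= d -> d <= T -> T <= T' ->
  RInt Gfun d T <= RInt Gfun d' T'.
Proof.
  intros H1 H2 H3 H4.
  assert (Hge : forall u v, 0 < u -> u <= v -> 0 <= RInt Gfun u v).
  { intros u v Hu Huv. apply RInt_ge_0; auto. apply ex_RInt_Gfun; auto.
    intros; apply Gfun_nonneg; lra. }
  rewrite <- (RInt_ChaslesR Gfun d' d T') by (apply ex_RInt_Gfun; lra).
  rewrite <- (RInt_ChaslesR Gfun d T T') by (apply ex_RInt_Gfun; lra).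
  assert (0 <= RInt Gfun d' d) by (apply Hge; lra).
  assert (0 <= RInt Gfun T T') by (apply Hge; lra).
  lra.
Qed.

Lemma RInt_Gfun_sup : exists l, (forall d T, 0 < d -> d <= T -> RInt Gfun d T <= l) /\
  (forall e, e > 0 -> exists d0 T0, 0 < d0 /\ d0 <= T0 /\ l - e < RInt Gfun d0 T0).
Proof.
  destruct RInt_Gfun_bounded as [B HB].
  set (E := fun x => exists d T, 0 < d /\ d <= T /\ x = RInt Gfun d T).
  destruct (completeness E) as [l [Hub Hlub]].
  { exists B. intros x [d [T [Hd [HdT ->]]]]. auto. }
  { exists (RInt Gfun 1 1). exists 1, 1. repeat split; lra. }
  exists l. split.
  - intros d T Hd HdT. apply Hub. exists d, T. auto.
  - intros e He. apply Classical_Prop.NNPP. intro Hn.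
    assert (l <= l - e); [|lra]. apply Hlub. intros x [d [T [Hd [HdT ->]]]].
    apply Rnot_lt_le. intro. apply Hn. exists d, T. auto.
Qed.

Lemma RInt_I_integrand_Gfun u v : 0 < u -> u <= v -> v < 1 ->
  RInt (I_integrand a j) u v = RInt Gfun (- ln v) (- ln u).
Proof.
  intros Hu Huv Hv.
  assert (Hlv : 0 < - ln v) by (assert (ln v < 0) by (rewrite <- ln_1; apply ln_increasing; lra); lra).
  assert (Hluv : - ln v <= - ln u) by (assert (ln u <= ln v) by (apply ln_le; lra); lra).
  assert (Hc := @RInt_comp R_CompleteNormedModule (I_integrand a j) (fun y => exp (- y))
                  (fun y => - exp (- y)) (- ln u) (- ln v)).
  cbv beta in Hc. rewrite !Ropp_involutive, !exp_ln in Hc by lra.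
  rewrite <- Hc.
  - rewrite (RInt_extR _ (fun y => - Gfun y)).
    2: { intros x _. unfold Gfun, scal; simpl. unfold mult; simpl. ring. }
    assert (Ex : ex_RInt Gfun (- ln u) (- ln v))
      by (apply (@ex_RInt_swap R_NormedModule), ex_RInt_Gfun; lra).
    rewrite (@RInt_opp R_CompleteNormedModule Gfun) by auto.
    rewrite (@opp_RInt_swap R_CompleteNormedModule) by auto. reflexivity.
  - intros x Hx. rewrite Rmin_right in Hx by lra. rewrite Rmax_left in Hx by lra.
    apply I_integrand_continuous, exp_neg_in_unit. lra.
  - intros x Hx. split. auto_derive. auto. ring. apply ex_derive_continuousR. auto_derive. auto.
Qed.

Lemma diverge_set_iff x : diverge_set a x <-> x = 1.
Proof.
  split.
  - intros [Hx Hdiv]. destruct (Req_dec x 1) as [E|E]; auto. exfalso.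
    destruct (Req_dec x 0) as [E0|E0].
    + subst. destruct (Hdiv 0) as [n Hn].
      assert (R0 : forall b, rpow 0 b = 0) by (intros; unfold rpow; destruct (Rle_dec 0 0); lra).
      rewrite (sum_eq _ (fun _ => 0)), sum_cte in Hn by (intros; apply R0). lra.
    + destruct (a_moment_bounded x ltac:(lra)) as [B HB]. destruct (Hdiv B) as [n Hn].
      assert (sum_f_R0 (fun k => rpow x (a (S k))) n
              <= sum_f_R0 (fun k => a (S k) ^ j * rpow x (a (S k))) n).
      { apply sum_Rle. intros i _. assert (H1 := a_pow_ge1 i).
        assert (0 < rpow x (a (S i))) by (rewrite rpow_pos_eq by lra; apply exp_pos). nra. }
      specialize (HB n). lra.
  - intros ->. split. lra. intros M.
    destruct (INR_unbounded (Rmax M 0)) as [n Hn]. exists n.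
    rewrite (sum_eq _ (fun _ => 1)), sum_cte
      by (intros; rewrite rpow_pos_eq, ln_1, Rmult_0_r, exp_0 by lra; reflexivity).
    rewrite S_INR. assert (M <= Rmax M 0) by apply Rmax_l. lra.
Qed.

Lemma xalpha_eq_1 : xalpha a = 1.
Proof.
  assert (Hinf : is_inf (diverge_set a) 1).
  { split. intros x Hx. apply diverge_set_iff in Hx. lra.
    intros m' Hm'. apply Hm', diverge_set_iff. reflexivity. }
  unfold xalpha.
  destruct (epsilon_spec (inhabits 0) (is_inf (diverge_set a)) (ex_intro _ 1 Hinf)) as [H1 H3].
  apply Rle_antisym. apply H1, diverge_set_iff; reflexivity. apply H3, Hinf.
Qed.

Lemma I_integrand_ImpIntOpen l :
  (forall d T, 0 < d -> d <= T -> RInt Gfun d T <= l) ->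
  (forall e, e > 0 -> exists d0 T0, 0 < d0 /\ d0 <= T0 /\ l - e < RInt Gfun d0 T0) ->
  ImpIntOpen (I_integrand a j) 0 (xalpha a) l.
Proof.
  intros Hle Happ. rewrite xalpha_eq_1. split.
  - intros u v Hu Huv Hv. constructor. apply ex_RInt_Reals_0, ex_RInt_contR. intros z Hz.
    rewrite Rmin_left in Hz by lra. rewrite Rmax_right in Hz by lra.
    apply I_integrand_continuous. lra.
  - intros e He. destruct (Happ e He) as [d0 [T0 [Hd0 [HdT0 Hl0]]]].
    assert (E1 : 0 < exp (- T0)) by apply exp_pos.
    assert (E2 : exp (- d0) < 1) by now apply exp_neg_in_unit.
    exists (Rmin (exp (- T0)) (1 - exp (- d0))). split. apply Rmin_glb_lt; lra.
    intros u v pr Hu1 Hu2 Hv1 Hv2 Huv.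
    assert (Hm1 := Rmin_l (exp (- T0)) (1 - exp (- d0))).
    assert (Hm2 := Rmin_r (exp (- T0)) (1 - exp (- d0))).
    rewrite <- RInt_Reals, RInt_I_integrand_Gfun by lra.
    assert (HT : T0 <= - ln u).
    { assert (ln u <= ln (exp (- T0))) by (apply ln_le; lra). rewrite ln_exp in H. lra. }
    assert (Hd : - ln v <= d0).
    { assert (ln (exp (- d0)) <= ln v) by (apply ln_le; [apply exp_pos|lra]). rewrite ln_exp in H. lra. }
    assert (Hv0 : 0 < - ln v) by (assert (ln v < 0) by (rewrite <- ln_1; apply ln_increasing; lra); lra).
    assert (H1 := RInt_Gfun_mono (- ln v) d0 T0 (- ln u) Hv0 Hd HdT0 HT).
    assert (H2 := Hle (- ln v) (- ln u) Hv0 ltac:(lra)).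
    apply Rabs_def1; lra.
Qed.

Lemma sum1n_RInt_majorant_split K N u v : (K <= N)%nat -> 0 <= u -> u <= v ->
  sum1n (fun k => RInt (majorant k) u v) N <=
  sum1n (fun k => RInt (majorant k) u v) K + (sum1n majorant_mass N - sum1n majorant_mass K).
Proof.
  intros HKN Hu Huv.
  assert (sum1n (fun k => RInt (majorant k) u v) N - sum1n (fun k => RInt (majorant k) u v) K
          <= sum1n majorant_mass N - sum1n majorant_mass K); [|lra].
  apply sum1n_tail_le; auto. intros k Hk. apply RInt_majorant_le; lia || lra.
Qed.

Lemma RInt_EU_sum_near0 e : e > 0 -> exists d K, 0 < d /\
  forall N d', (K <= N)%nat -> 0 <= d' <= d -> RInt (EU_sum N) 0 d' <= e.
Proof.
  intros He. destruct (majorant_mass_tail_small (e / 2) ltac:(lra)) as [K [HK1 HK]].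
  destruct (RInt_majorant_near0 K (e / 2) ltac:(lra)) as [d [Hd Hsd]].
  exists d, K. split; [lra|]. intros N d' HN Hd'.
  assert (sum1n (fun k => RInt (majorant k) 0 d') K <= sum1n (fun k => RInt (majorant k) 0 d) K).
  { apply sum1n_le. intros k Hk. apply RInt_nonneg_mono; try lra.
    intros; apply majorant_continuous. intros; apply majorant_nonneg; lia || lra. }
  assert (Hsplit := sum1n_RInt_majorant_split K N 0 d' HN ltac:(lra) ltac:(lra)).
  destruct (RInt_EU_sum_bounds N 0 d' ltac:(lia) ltac:(lra) ltac:(lra)).
  specialize (HK N HN). lra.
Qed.

Lemma RInt_EU_sum_near_infty e : e > 0 -> exists T K, 0 < T /\
  forall N T' v, (K <= N)%nat -> T <= T' -> T' <= v -> RInt (EU_sum N) T' v <= e.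
Proof.
  intros He. destruct (majorant_mass_tail_small (e / 2) ltac:(lra)) as [K [HK1 HK]].
  destruct (RInt_majorant_near_infty K (e / 2) ltac:(lra)) as [T [HT HsT]].
  exists T, K. split; [lra|]. intros N T' v HN HT' Hv.
  assert (sum1n (fun k => RInt (majorant k) T' v) K <= sum1n (fun k => RInt (majorant k) T v) K).
  { apply sum1n_le. intros k Hk. apply RInt_nonneg_mono; try lra.
    intros; apply majorant_continuous. intros; apply majorant_nonneg; lia || lra. }
  assert (Hsplit := sum1n_RInt_majorant_split K N T' v HN ltac:(lra) ltac:(lra)).
  destruct (RInt_EU_sum_bounds N T' v ltac:(lia) ltac:(lra) ltac:(lra)).
  specialize (HK N HN). specialize (HsT v ltac:(lra)). lra.
Qed.

Lemma EU_cv l :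
  (forall d T, 0 < d -> d <= T -> RInt Gfun d T <= l) ->
  (forall e, e > 0 -> exists d0 T0, 0 < d0 /\ d0 <= T0 /\ l - e < RInt Gfun d0 T0) ->
  Un_cv (fun N => EU a j N) l.
Proof.
  intros Hle Happ e He. set (e' := e / 8).
  destruct (RInt_EU_sum_near0 e' ltac:(unfold e'; lra)) as [d1 [K1 [Hd1 Hnear0]]].
  destruct (RInt_EU_sum_near_infty e' ltac:(unfold e'; lra)) as [T1 [K2 [HT1 Hinfty]]].
  destruct (Happ e' ltac:(unfold e'; lra)) as [d0 [T0 [Hd0 [HdT0 Hl0]]]].
  set (d := Rmin d0 d1). set (T := Rmax T0 T1).
  assert (Hdd0 : d <= d0) by apply Rmin_l. assert (Hdd1 : d <= d1) by apply Rmin_r.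
  assert (HTT0 : T0 <= T) by apply Rmax_l. assert (HTT1 : T1 <= T) by apply Rmax_r.
  assert (Hd : 0 < d) by (apply Rmin_glb_lt; lra).
  assert (HGf := RInt_Gfun_mono d d0 T0 T Hd Hdd0 HdT0 HTT0).
  assert (HGl := Hle d T Hd ltac:(lra)).
  destruct (RInt_Gfun_EU_sum_close d T Hd ltac:(lra) e' ltac:(unfold e'; lra)) as [N0 HN0].
  exists (max (max N0 (max K1 K2)) 1). intros N HN. unfold R_dist.
  destruct (RInt_EU_sum_cv N ltac:(lia) e' ltac:(unfold e'; lra)) as [M HM].
  set (v := Rmax M T). specialize (HM v (Rmax_l M T)).
  assert (HvT : T <= v) by apply Rmax_r.
  assert (Ex : forall x y, 0 <= x -> 0 <= y -> ex_RInt (EU_sum N) x y)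
    by (intros; apply ex_RInt_on_nonneg; auto; intros; apply EU_sum_continuous).
  rewrite <- (RInt_ChaslesR (EU_sum N) 0 d v), <- (RInt_ChaslesR (EU_sum N) d T v) in HM
    by (apply Ex; lra).
  assert (H0d := Hnear0 N d ltac:(lia) ltac:(lra)).
  assert (HTv := Hinfty N T v ltac:(lia) ltac:(lra) ltac:(lra)).
  destruct (RInt_EU_sum_bounds N 0 d ltac:(lia) ltac:(lra) ltac:(lra)).
  destruct (RInt_EU_sum_bounds N T v ltac:(lia) ltac:(lra) ltac:(lra)).
  assert (HC := HN0 N ltac:(lia)). apply Rabs_def2 in HM.
  assert (HC1 := Rle_abs (RInt Gfun d T - RInt (EU_sum N) d T)).
  assert (HC2 := Rle_abs (- (RInt Gfun d T - RInt (EU_sum N) d T))). rewrite Rabs_Ropp in HC2.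
  apply Rabs_def1; unfold e' in *; lra.
Qed.

Theorem LimitIsI_of_ratio_bound : LimitIsI a a j.
Proof.
  destruct RInt_Gfun_sup as [l [Hle Happ]]. split.
  - intros N k _ Hk. now apply EU_integrand_ImpIntInf.
  - exists l. split; [now apply I_integrand_ImpIntOpen|now apply EU_cv].
Qed.

End GenericLimit.

(** * The sequences e^{pk^q}, k! and e^{pk} *)

Lemma exp_INR_mult n z : exp (INR n * z) = exp z ^ n.
Proof.
  induction n. simpl. rewrite Rmult_0_l. apply exp_0.
  rewrite S_INR, Rmult_plus_distr_r, Rmult_1_l, exp_plus, IHn. simpl. ring.
Qed.

Lemma pow_le_exp n y : (1 <= n)%nat -> 0 <= y -> y ^ n <= INR n ^ n * exp y.
Proof.
  intros Hn Hy. assert (HnR : 0 < INR n) by (apply lt_0_INR; lia).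
  replace y with (INR n * (y / INR n)) at 2 by (field; lra).
  rewrite exp_INR_mult, <- Rpow_mult_distr.
  apply pow_incr. split. lra.
  assert (H := exp_ineq1_le (y / INR n)).
  replace y with (INR n * (y / INR n)) at 1 by (field; lra).
  apply Rmult_le_compat_l; lra.
Qed.

Lemma pow_mul_exp_neg_le n y : (1 <= n)%nat -> 0 <= y -> y ^ n * exp (- y) <= INR n ^ n.
Proof.
  intros Hn Hy. assert (H := pow_le_exp n y Hn Hy).
  assert (E : exp y * exp (- y) = 1) by (rewrite <- exp_plus, Rplus_opp_r; apply exp_0).
  apply Rmult_le_compat_r with (r := exp (- y)) in H; [|left; apply exp_pos].
  rewrite Rmult_assoc, E in H. lra.
Qed.

Lemma sum_geometric_le M rho n : 0 <= M -> 0 < rho < 1 ->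
  sum_f_R0 (fun k => M * rho ^ S k) n <= M / (1 - rho).
Proof.
  intros HM Hrho.
  replace (sum_f_R0 (fun k => M * rho ^ S k) n) with (M * rho * sum_f_R0 (fun k => rho ^ k) n)
    by (induction n; cbn [sum_f_R0]; [simpl; ring|rewrite <- IHn; simpl; ring]).
  rewrite tech3 by lra.
  assert (0 < rho ^ S n) by (apply pow_lt; lra).
  replace (M * rho * ((1 - rho ^ S n) / (1 - rho)))
    with (M / (1 - rho) * (rho * (1 - rho ^ S n))) by (field; lra).
  rewrite <- (Rmult_1_r (M / (1 - rho))) at 2.
  apply Rmult_le_compat_l; [apply Rdiv_le_0_compat|]; nra.
Qed.

(* Write x = e^{-s}: then a_k^j x^{a_k} = (a_k^j e^{-s a_k / 2}) e^{-s a_k / 2}, where the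
   first factor is bounded and the second is at most rho^k with rho = e^{-s c / 2}. *)
Lemma moment_bounded_of_linear_growth (a : nat -> R) j c : (1 <= j)%nat -> 0 < c ->
  (forall k, c * INR (S k) <= a (S k)) -> (forall k, 1 <= a (S k)) ->
  forall x, 0 < x < 1 ->
  exists B, forall n, sum_f_R0 (fun k => a (S k) ^ j * rpow x (a (S k))) n <= B.
Proof.
  intros Hj Hc Hlin Hpos x Hx.
  set (s := - ln x).
  assert (Hs : 0 < s) by (assert (ln x < 0) by (rewrite <- ln_1; apply ln_increasing; lra); unfold s; lra).
  set (rho := exp (- (s * c / 2))).
  assert (Hrho : 0 < rho < 1) by (apply exp_neg_in_unit; apply Rdiv_lt_0_compat; nra).
  set (M := (2 / s) ^ j * INR j ^ j).
  assert (H2s : 0 < 2 / s) by (apply Rdiv_lt_0_compat; lra).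
  assert (HM : 0 <= M) by (apply Rmult_le_pos; apply pow_le; [lra|apply pos_INR]).
  exists (M / (1 - rho)). intros n.
  eapply Rle_trans; [|apply (sum_geometric_le M rho n HM Hrho)].
  apply sum_Rle. intros k _.
  rewrite rpow_pos_eq by lra. replace (a (S k) * ln x) with (- (s * a (S k))) by (unfold s; ring).
  set (A := a (S k)). assert (HA : 1 <= A) by apply Hpos.
  set (y := s * A / 2). assert (Hy : 0 <= y) by (unfold y; nra).
  assert (H1 : exp (- y) <= rho ^ S k).
  { unfold rho. rewrite <- exp_INR_mult. apply exp_le_mono. specialize (Hlin k). fold A in Hlin.
    unfold y. replace (INR (S k) * - (s * c / 2)) with (- (s / 2) * (c * INR (S k))) by field.
    replace (- (s * A / 2)) with (- (s / 2) * A) by field.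
    apply Rmult_le_compat_neg_l; lra. }
  assert (H2 : A ^ j * exp (- y) <= M).
  { replace A with (2 / s * y) at 1 by (unfold y; field; lra). rewrite Rpow_mult_distr, Rmult_assoc.
    apply Rmult_le_compat_l; [apply pow_le; lra|]. now apply pow_mul_exp_neg_le. }
  replace (exp (- (s * A))) with (exp (- y) * exp (- y)) by (rewrite <- exp_plus; f_equal; unfold y; field).
  assert (0 < exp (- y)) by apply exp_pos. assert (0 <= A ^ j) by (apply pow_le; lra).
  rewrite <- Rmult_assoc. apply Rmult_le_compat; auto. apply Rmult_le_pos; lra. lra.
Qed.

Lemma exp_ge1 y : 0 <= y -> 1 <= exp y.
Proof. intros Hy. assert (H := exp_ineq1_le y). lra. Qed.

Theorem LimitIsI_fact j : (1 <= j)%nat -> LimitIsI (fun k => INR (fact k)) (fun k => INR (fact k)) j.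
Proof.
  intros Hj.
  assert (Hpos : forall k, 1 <= INR (fact (S k))) by (intros; apply (le_INR 1), lt_O_fact).
  apply LimitIsI_of_ratio_bound; auto.
  - intros k. apply le_INR, fact_le. lia.
  - apply (moment_bounded_of_linear_growth (fun k => INR (fact k)) j 1); auto; try lra.
    intros k. rewrite Rmult_1_l. apply le_INR. simpl. assert (1 <= fact k)%nat by apply lt_O_fact. nia.
  - exists (max j 2). split. lia. intros k Hk.
    replace (INR (fact k) / INR (fact (S k))) with (/ INR (S k))
      by (rewrite fact_simpl, mult_INR; field; split; apply not_0_INR; try apply fact_neq_0; lia).
    rewrite pow_inv.
    assert (Hn : (2 * (j + k - 1) <= (S k) ^ k)%nat).
    { assert (H1 : (S k ^ 2 <= S k ^ k)%nat) by (apply Nat.pow_le_mono_r; lia). simpl in H1. nia. }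
    apply le_INR in Hn. rewrite mult_INR, pow_INR in Hn. simpl (INR 2) in Hn.
    assert (0 < INR (S k) ^ k) by (apply pow_lt, lt_0_INR; lia).
    apply (Rmult_le_reg_r (INR (S k) ^ k)). auto.
    rewrite Rmult_assoc, Rinv_l by lra. lra.
Qed.

Theorem LimitIsI_exp_linear p j : 0 < p -> (1 <= j)%nat ->
  LimitIsI (fun k => exp (p * INR k)) (fun k => exp (p * INR k)) j.
Proof.
  intros Hp Hj.
  assert (Hpk : forall k, 0 <= p * INR k) by (intros; apply Rmult_le_pos; [lra|apply pos_INR]).
  apply LimitIsI_of_ratio_bound; auto.
  - intros k. apply exp_ge1, Hpk.
  - intros k. apply exp_le_mono, Rmult_le_compat_l, le_INR; lia || lra.
  - apply (moment_bounded_of_linear_growth (fun k => exp (p * INR k)) j p); auto.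
    + intros k. assert (H := exp_ineq1_le (p * INR (S k))). lra.
    + intros k. apply exp_ge1, Hpk.
  - destruct (INR_unbounded (16 / (p * p))) as [n0 Hn0].
    exists (max (max j n0) 1). split. lia. intros k Hk.
    replace (exp (p * INR k) / exp (p * INR (S k))) with (exp (- p))
      by (unfold Rdiv; rewrite <- exp_Ropp, <- exp_plus; f_equal; rewrite S_INR; ring).
    rewrite <- exp_INR_mult.
    set (y := p * INR k). replace (INR k * - p) with (- y) by (unfold y; ring).
    assert (Hk1 : INR n0 <= INR k) by (apply le_INR; lia).
    assert (Hkj : INR j <= INR k) by (apply le_INR; lia).
    assert (Hy : 0 <= y) by apply Hpk.
    assert (H2 := pow_le_exp 2 y ltac:(lia) Hy). simpl in H2.
    assert (Hjk : INR (j + k - 1) <= INR j + INR k) by (rewrite <- plus_INR; apply le_INR; lia).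
    assert (Hppk : 16 <= p * p * INR k).
    { apply (Rmult_lt_compat_l (p * p)) in Hn0; [|nra]. unfold Rdiv in Hn0.
      rewrite <- Rmult_assoc, (Rmult_comm (p * p) 16), Rmult_assoc, Rinv_r in Hn0 by nra. nra. }
    assert (Hey : 2 * INR (j + k - 1) <= exp y).
    { assert (y * y <= 4 * exp y) by lra. unfold y in *. nra. }
    assert (0 < exp (- y)) by apply exp_pos.
    assert (E2 : exp y * exp (- y) = 1) by (rewrite <- exp_plus, Rplus_opp_r; apply exp_0).
    nra.
Qed.

Lemma prod_f_R0_shift (g : nat -> R) n : prod_f_R0 g (S n) = g 0%nat * prod_f_R0 (fun i => g (S i)) n.
Proof. induction n. simpl. ring. cbn [prod_f_R0] in *. rewrite IHn. ring. Qed.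

Lemma prod_f_R0_rev (f : nat -> R) n : prod_f_R0 f n = prod_f_R0 (fun i => f (n - i)%nat) n.
Proof.
  induction n. reflexivity.
  rewrite (prod_f_R0_shift (fun i => f (S n - i)%nat)). cbn [prod_f_R0]. rewrite IHn, Nat.sub_0_r.
  apply Rmult_comm.
Qed.

Lemma sum_f_R0_rev (f : nat -> R) n : sum_f_R0 f n = sum_f_R0 (fun i => f (n - i)%nat) n.
Proof.
  induction n. reflexivity.
  rewrite (decomp_sum (fun i => f (S n - i)%nat)) by lia. cbn [sum_f_R0 Nat.pred].
  rewrite IHn, Nat.sub_0_r. apply Rplus_comm.
Qed.

Lemma ImpIntInf_scale (g : R -> R) v lam : 0 < lam -> (forall t, 0 <= t -> continuous g t) ->
  ImpIntInf g 0 v -> ImpIntInf (fun t => lam * g (lam * t)) 0 v.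
Proof.
  intros Hl Hc Hg. apply ImpIntInf_RInt.
  - intros t Ht. apply (continuousR_mult (fun _ => lam) (fun t => g (lam * t))).
    apply continuousR_const. apply (continuousR_comp (fun t => lam * t) g).
    apply continuousR_mult. apply continuousR_const. apply continuousR_id. apply Hc. nra.
  - intros e He. destruct (proj1 (ImpIntInf_RInt g v Hc) Hg e He) as [M HM].
    exists (Rmax M 0 / lam). intros w Hw Hw0.
    assert (HlamW : Rmax M 0 <= lam * w).
    { apply (Rmult_le_compat_l lam) in Hw; [|lra].
      replace (lam * (Rmax M 0 / lam)) with (Rmax M 0) in Hw by (field; lra). lra. }
    replace (RInt (fun t => lam * g (lam * t)) 0 w) with (RInt g 0 (lam * w)).
    + apply HM; [eapply Rle_trans; [apply Rmax_l|exact HlamW]|nra].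
    + assert (H := @RInt_comp_lin R_CompleteNormedModule g lam 0 0 w).
      rewrite Rmult_0_r, !Rplus_0_r in H. rewrite <- H.
      * apply RInt_extR. intros x _. unfold scal; simpl. unfold mult; simpl. now rewrite Rplus_0_r.
      * apply ex_RInt_on_nonneg; auto; nra.
Qed.

Section ExpDecay.

Variable p : R.
Hypothesis p_pos : 0 < p.
Variable j : nat.
Hypothesis j_pos : (1 <= j)%nat.

Let c := fun k => exp (- (p * INR k)).
Let alpha := fun k => exp (p * INR k).

(* With lam = e^{-p(N+1)} one has c_k = lam * alpha_{N+1-k} for 1 <= k <= N. *)
Lemma EU_integrand_exp_decay N k : (1 <= k <= N)%nat ->
  EU_integrand c N j k = fun t => exp (- (p * INR (S N))) *
    EU_integrand alpha N j (S N - k) (exp (- (p * INR (S N))) * t).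
Proof.
  intros Hk. apply functional_extensionality. intros t.
  set (lam := exp (- (p * INR (S N)))).
  assert (Hc : forall i, (1 <= i <= N)%nat -> c i = lam * alpha (S N - i)%nat).
  { intros i Hi. unfold c, alpha, lam. rewrite <- exp_plus. f_equal. rewrite minus_INR by lia. ring. }
  unfold EU_integrand. rewrite (Hc k Hk).
  rewrite (prod_f_R0_rev (fun i => if Nat.eqb (S i) k then 1 else 1 - exp (- (c (S i) * t)))).
  rewrite (prod_f_R0_ext _
             (fun i => if Nat.eqb (S i) (S N - k) then 1 else 1 - exp (- (alpha (S i) * (lam * t))))).
  - replace (lam * alpha (S N - k)%nat * t) with (alpha (S N - k)%nat * (lam * t)) by ring.
    rewrite !Rpow_mult_distr. field. apply not_0_INR, fact_neq_0.
  - intros i Hi. cbv beta.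
    destruct (Nat.eqb_spec (S (N - 1 - i)) k); destruct (Nat.eqb_spec (S i) (S N - k)); try lia.
    + reflexivity.
    + rewrite (Hc (S (N - 1 - i)) ltac:(lia)). replace (S N - S (N - 1 - i))%nat with (S i) by lia.
      f_equal. f_equal. ring.
Qed.

Lemma EU_integrand_exp_decay_ImpIntInf N k : (2 <= N)%nat -> (1 <= k <= N)%nat ->
  exists v, ImpIntInf (EU_integrand c N j k) 0 v /\
            ImpIntInf (EU_integrand alpha N j (S N - k)) 0 v.
Proof.
  intros HN Hk.
  destruct (proj1 (LimitIsI_exp_linear p j p_pos j_pos) N (S N - k)%nat HN ltac:(lia)) as [v Hv].
  exists v. split; auto.
  rewrite (EU_integrand_exp_decay N k Hk). apply ImpIntInf_scale; auto.
  apply exp_pos. intros; apply EU_integrand_continuous.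
Qed.

Lemma EU_exp_decay N : (2 <= N)%nat -> EU c j N = EU alpha j N.
Proof.
  intros HN. unfold EU. rewrite (sum_f_R0_rev (fun k => imp_int_inf (EU_integrand alpha N j (S k)) 0)).
  apply sum_eq. intros i Hi.
  destruct (EU_integrand_exp_decay_ImpIntInf N (S i) HN ltac:(lia)) as [v [Hv1 Hv2]].
  replace (S (N - 1 - i)) with (S N - S i)%nat by lia.
  rewrite (imp_int_inf_eq _ _ _ Hv1), (imp_int_inf_eq _ _ _ Hv2). reflexivity.
Qed.

Theorem LimitIsI_exp_decay : LimitIsI c alpha j.
Proof.
  destruct (LimitIsI_exp_linear p j p_pos j_pos) as [_ [l [Hl1 Hl2]]]. split.
  - intros N k HN Hk. destruct (EU_integrand_exp_decay_ImpIntInf N k HN Hk) as [v [Hv _]]. eauto.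
  - exists l. split; auto. intros e He. destruct (Hl2 e He) as [N0 HN0]. exists (max N0 2).
    intros N HN. rewrite EU_exp_decay by lia. apply HN0. lia.
Qed.

End ExpDecay.

Lemma ln_1_plus_ge h : 0 < h -> h / (1 + h) <= ln (1 + h).
Proof.
  intros Hh. assert (H := exp_ineq1_le (ln (/ (1 + h)))).
  rewrite exp_ln in H by (apply Rinv_0_lt_compat; lra). rewrite ln_Rinv in H by lra.
  replace (/ (1 + h)) with (1 - h / (1 + h)) in H by (field; lra). lra.
Qed.

Lemma Rpower_1_plus_ge h q : 0 < h -> 0 < q -> 1 + q * (h / (1 + h)) <= Rpower (1 + h) q.
Proof.
  intros Hh Hq. unfold Rpower. assert (H := exp_ineq1_le (q * ln (1 + h))).
  assert (q * (h / (1 + h)) <= q * ln (1 + h)) by (apply Rmult_le_compat_l; [lra|now apply ln_1_plus_ge]).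
  lra.
Qed.

Lemma exists_nat_mult_ge q c : 0 < q -> exists m, (1 <= m)%nat /\ c <= INR m * q.
Proof.
  intros Hq. destruct (INR_unbounded (c / q)) as [n Hn]. exists (S n). split. lia.
  rewrite S_INR. apply (Rmult_lt_compat_r q) in Hn; auto.
  replace (c / q * q) with c in Hn by (field; lra). nra.
Qed.

Section ExpPower.

Variables p q : R.
Hypothesis p_pos : 0 < p.
Hypothesis q_pos : 0 < q.

Let P k := Rpower (INR k) q.
Let a k := exp (p * P k).

Lemma P_pos k : 0 < P k.
Proof. apply exp_pos. Qed.

Lemma P_pow k m : (1 <= k)%nat -> P k ^ m = Rpower (INR k) (INR m * q).
Proof.
  intros Hk. unfold P. rewrite <- Rpower_pow by apply exp_pos.
  rewrite Rpower_mult. f_equal. ring.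
Qed.

(* C = b^m / m^m for any m with m q >= r, since y^m <= m^m e^y. *)
Lemma exp_P_ge_power b r : 0 < b -> 1 <= r ->
  exists C, 0 < C /\ forall k, (1 <= k)%nat -> C * Rpower (INR k) r <= exp (b * P k).
Proof.
  intros Hb Hr. destruct (exists_nat_mult_ge q r q_pos) as [m [Hm Hmq]].
  assert (HmR : 0 < INR m) by (apply lt_0_INR; lia).
  assert (Hbm : 0 < b ^ m) by (apply pow_lt; lra).
  assert (Hmm : 0 < INR m ^ m) by (apply pow_lt; lra).
  exists (b ^ m / INR m ^ m). split. now apply Rdiv_lt_0_compat. intros k Hk.
  assert (Hk1 : 1 <= INR k) by (apply (le_INR 1); lia).
  assert (Hy : 0 <= b * P k) by (assert (H := P_pos k); nra).
  assert (H1 := pow_le_exp m (b * P k) Hm Hy).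
  rewrite Rpow_mult_distr, P_pow in H1 by lia.
  assert (H2 : Rpower (INR k) r <= Rpower (INR k) (INR m * q)) by (apply Rle_Rpower; lra).
  apply (Rmult_le_reg_l (INR m ^ m)); auto.
  replace (INR m ^ m * (b ^ m / INR m ^ m * Rpower (INR k) r)) with (b ^ m * Rpower (INR k) r)
    by (field; lra).
  assert (b ^ m * Rpower (INR k) r <= b ^ m * Rpower (INR k) (INR m * q))
    by (apply Rmult_le_compat_l; lra).
  lra.
Qed.

Lemma a_exp_power_ge1 k : 1 <= a (S k).
Proof. apply exp_ge1. assert (H := P_pos (S k)). nra. Qed.

Lemma a_exp_power_incr k : a (S k) <= a (S (S k)).
Proof.
  apply exp_le_mono, Rmult_le_compat_l; [lra|]. apply Rle_Rpower_l; [lra|].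
  split; [apply lt_0_INR|apply le_INR]; lia.
Qed.

Lemma a_exp_power_linear : exists c, 0 < c /\ forall k, c * INR (S k) <= a (S k).
Proof.
  destruct (exp_P_ge_power p 1 p_pos ltac:(lra)) as [C [HC H]].
  exists C. split; auto. intros k. rewrite <- (Rpower_1 (INR (S k))) by (apply lt_0_INR; lia).
  apply H. lia.
Qed.

Lemma P_S_ge k : (1 <= k)%nat -> P k * (1 + q * (1 / INR (S k))) <= P (S k).
Proof.
  intros Hk. assert (HkR : 0 < INR k) by (apply lt_0_INR; lia).
  unfold P. replace (INR (S k)) with (INR k * (1 + 1 / INR k)) at 2 by (rewrite S_INR; field; lra).
  rewrite <- Rpower_mult_distr by (try apply Rplus_lt_0_compat; try apply Rdiv_lt_0_compat; lra).
  apply Rmult_le_compat_l. left; apply exp_pos.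
  assert (H := Rpower_1_plus_ge (1 / INR k) q ltac:(apply Rdiv_lt_0_compat; lra) q_pos).
  replace (1 / INR k / (1 + 1 / INR k)) with (1 / INR (S k)) in H by (rewrite S_INR; field; lra).
  lra.
Qed.

(* The exponent is -p k (P(k+1) - P(k)) <= -p q P(k) / 2, as P(k+1) >= P(k) (1 + q/(k+1)). *)
Lemma a_exp_power_ratio_pow k : (1 <= k)%nat ->
  (a k / a (S k)) ^ k <= exp (- (p * q * P k / 2)).
Proof.
  intros Hk. assert (Hk1 : 1 <= INR k) by (apply (le_INR 1); lia).
  assert (HPk := P_pos k). assert (HS := P_S_ge k Hk).
  unfold a, Rdiv. rewrite <- exp_Ropp, <- exp_plus, <- exp_INR_mult. apply exp_le_mono.
  assert (HSk : INR k / INR (S k) >= 1 / 2).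
  { rewrite S_INR. apply Rle_ge. apply (Rmult_le_reg_r (INR k + 1)). lra.
    replace (INR k / (INR k + 1) * (INR k + 1)) with (INR k) by (field; lra). lra. }
  assert (INR k * (P (S k) - P k) >= q * P k / 2).
  { assert (INR k * (P (S k) - P k) >= INR k * (P k * (q * (1 / INR (S k)))))
      by (apply Rle_ge, Rmult_le_compat_l; lra).
    assert (INR k * (P k * (q * (1 / INR (S k)))) = q * P k * (INR k / INR (S k)))
      by (field; apply not_0_INR; lia).
    assert (q * P k * (INR k / INR (S k)) >= q * P k * (1 / 2))
      by (apply Rle_ge, Rmult_le_compat_l; [nra|lra]).
    lra. }
  replace (INR k * (p * P k + - (p * P (S k)))) with (- (p * (INR k * (P (S k) - P k)))) by ring.
  nra.
Qed.

Lemma a_exp_power_ratio j : exists K0, (1 <= K0)%nat /\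
  forall k, (K0 <= k)%nat -> INR (j + k - 1) * (a k / a (S k)) ^ k <= 1 / 2.
Proof.
  destruct (exp_P_ge_power (p * q / 2) 2 ltac:(apply Rdiv_lt_0_compat; nra) ltac:(lra))
    as [C [HC HCk]].
  destruct (INR_unbounded (4 / C)) as [n0 Hn0].
  exists (max (max j n0) 1). split. lia. intros k Hk.
  assert (Hk1 : 1 <= INR k) by (apply (le_INR 1); lia).
  set (y := p * q * P k / 2).
  assert (Hr := a_exp_power_ratio_pow k ltac:(lia)). fold y in Hr.
  assert (Hey : C * (INR k * INR k) <= exp y).
  { replace (INR k * INR k) with (Rpower (INR k) 2).
    - replace y with (p * q / 2 * P k) by (unfold y; field). apply HCk. lia.
    - replace 2 with (INR 2) by (simpl; lra). rewrite Rpower_pow by lra. simpl. ring. }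
  assert (Hkn : INR n0 <= INR k) by (apply le_INR; lia).
  assert (Hkj : INR j <= INR k) by (apply le_INR; lia).
  assert (Hjk : INR (j + k - 1) <= INR j + INR k) by (rewrite <- plus_INR; apply le_INR; lia).
  assert (HCk4 : 4 <= C * INR k).
  { apply (Rmult_lt_compat_l C) in Hn0; auto.
    replace (C * (4 / C)) with 4 in Hn0 by (field; lra).
    assert (C * INR n0 <= C * INR k) by (apply Rmult_le_compat_l; lra). lra. }
  assert (4 * INR k <= C * INR k * INR k) by (apply Rmult_le_compat_r; lra).
  assert (H2k : 2 * INR (j + k - 1) <= exp y) by lra.
  assert (0 < exp (- y)) by apply exp_pos.
  assert (E2 : exp y * exp (- y) = 1) by (rewrite <- exp_plus, Rplus_opp_r; apply exp_0).
  assert (0 <= INR (j + k - 1)) by apply pos_INR.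
  assert (INR (j + k - 1) * (a k / a (S k)) ^ k <= INR (j + k - 1) * exp (- y))
    by (apply Rmult_le_compat_l; auto).
  nra.
Qed.

Theorem LimitIsI_exp_power j : (1 <= j)%nat -> LimitIsI a a j.
Proof.
  intros Hj. destruct a_exp_power_linear as [c [Hc Hl]].
  apply LimitIsI_of_ratio_bound; auto.
  - apply a_exp_power_ge1.
  - apply a_exp_power_incr.
  - apply (moment_bounded_of_linear_growth a j c); auto. apply a_exp_power_ge1.
  - apply a_exp_power_ratio.
Qed.

End ExpPower.

Theorem mainTheorem13 :
  (* (a) a_k = e^{p k^q} *)
  (forall p q : R, 0 < p -> 0 < q -> forall j : nat, (2 <= j)%nat ->
     LimitIsI (fun k => exp (p * Rpower (INR k) q))
              (fun k => exp (p * Rpower (INR k) q)) j) /\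
  (* (b) a_k = k! *)
  (forall j : nat, (2 <= j)%nat ->
     LimitIsI (fun k => INR (fact k)) (fun k => INR (fact k)) j) /\
  (* (c) c_k = b_k = e^{-pk}, alpha = {e^{pk}} *)
  (forall p : R, 0 < p -> forall j : nat, (2 <= j)%nat ->
     LimitIsI (fun k => exp (- (p * INR k))) (fun k => exp (p * INR k)) j).
Proof.
  split; [|split].
  - intros p q Hp Hq j Hj. apply LimitIsI_exp_power; auto; lia.
  - intros j Hj. apply LimitIsI_fact. lia.
  - intros p Hp j Hj. apply LimitIsI_exp_decay; auto; lia.
Qed.
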